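(* Let $M$ be an oriented timelike surface in $\mathbb{R}^{3,1}$ with a canonical null direction with respect to a constant unit spacelike vector $Z$ such that $II(Z^\top,Z^\top)\neq0$ everywhere, and let $G:M\to\Lambda^2\mathbb{R}^{3,1}$ be its Gauss map. Then the complex quadratic form $G^*H$ vanishes identically on $M$ if and only if $M$ is minimal and has flat normal bundle.
   Context: $\mathbb{R}^{3,1}$ is $\mathbb{R}^{4}$ with the metric $-dx_1^2+dx_2^2+dx_3^2+dx_4^2$ and canonical basis $e_1,\dots,e_4$. A surface is timelike if the induced metric has signature $(1,1)$; a vector $v$ is lightlike if $v\ne0$ and $\langle v,v\rangle=0$. For a constant vector $Z$, $Z=Z^\top+Z^\perp$ along $M$; $M$ has a canonical null direction with respect to $Z$ if $Z^\top$ is lightlike everywhere. $\Lambda^2\mathbb{R}^{3,1}$ carries the induced metric $\langle u_1\wedge u_2,v_1\wedge v_2\rangle=\det(\langle u_i,v_j\rangle)$; $\Lambda^4\mathbb{R}^{3,1}$ is identified with $\mathbb{R}$ via $e_1\wedge e_2\wedge e_3\wedge e_4\mapsto1$. Define the $\mathbb{C}$-valued form $H(\eta,\eta')=\langle\eta,\eta'\rangle+\mathrm{i}\,\eta\wedge\eta'$ ($\mathrm{i}$ the imaginary unit). The Gauss map is $G(p)=u_1\wedge u_2$ for a positively oriented orthonormal basis $(u_1,u_2)$ of $T_pM$, and $G^*H$ is the complex quadratic form $u\mapsto H(dG_p(u),dG_p(u))$ on $T_pM$. Minimal means the mean curvature vector $\frac12\operatorname{tr}II$ vanishes; flat normal bundle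 means the normal curvature tensor vanishes. *)

From Stdlib Require Import Reals Lra ClassicalEpsilon.
Open Scope R_scope.

Record V4 := mkV4 { x1 : R; x2 : R; x3 : R; x4 : R }.

Definition vzero : V4 := mkV4 0 0 0 0.
Definition vadd (u v : V4) : V4 :=
  mkV4 (x1 u + x1 v) (x2 u + x2 v) (x3 u + x3 v) (x4 u + x4 v).
Definition vscal (a : R) (u : V4) : V4 :=
  mkV4 (a * x1 u) (a * x2 u) (a * x3 u) (a * x4 u).
Definition vsub (u v : V4) : V4 := vadd u (vscal (-1) v).

Definition mink (u v : V4) : R :=
  - x1 u * x1 v + x2 u * x2 v + x3 u * x3 v + x4 u * x4 v.

Definition lightlike (v : V4) : Prop := v <> vzero /\ mink v v = 0.

Record Biv := mkBiv { b12 : R; b13 : R; b14 : R; b23 : R; b24 : R; b34 : R }.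

Definition bzero : Biv := mkBiv 0 0 0 0 0 0.
Definition badd (a b : Biv) : Biv :=
  mkBiv (b12 a + b12 b) (b13 a + b13 b) (b14 a + b14 b)
        (b23 a + b23 b) (b24 a + b24 b) (b34 a + b34 b).
Definition bscal (c : R) (a : Biv) : Biv :=
  mkBiv (c * b12 a) (c * b13 a) (c * b14 a) (c * b23 a) (c * b24 a) (c * b34 a).

Definition wedge (u v : V4) : Biv :=
  mkBiv (x1 u * x2 v - x2 u * x1 v) (x1 u * x3 v - x3 u * x1 v)
        (x1 u * x4 v - x4 u * x1 v) (x2 u * x3 v - x3 u * x2 v)
        (x2 u * x4 v - x4 u * x2 v) (x3 u * x4 v - x4 u * x3 v).

(* Induced metric <u1^u2, v1^v2> = det(<u_i,v_j>), extended bilinearly: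
   the basis e_i^e_j (i<j) is orthogonal with <e_i^e_j,e_i^e_j> = eta_ii eta_jj. *)
Definition bivmet (a b : Biv) : R :=
  - b12 a * b12 b - b13 a * b13 b - b14 a * b14 b
  + b23 a * b23 b + b24 a * b24 b + b34 a * b34 b.

(* a /\ b in Lambda^4 identified with R via e1^e2^e3^e4 |-> 1 *)
Definition bivwedge (a b : Biv) : R :=
  b12 a * b34 b - b13 a * b24 b + b14 a * b23 b
  + b23 a * b14 b - b24 a * b13 b + b34 a * b12 b.

(* complex-valued H(eta,eta') = <eta,eta'> + i eta^eta', as (Re, Im) *)
Definition Hform (a b : Biv) : R * R := (bivmet a b, bivwedge a b).

Definition open2 (U : R -> R -> Prop) : Prop :=
  forall s t, U s t -> exists eps, 0 < eps /\
    forall s' t', Rabs (s' - s) < eps -> Rabs (t' - t) < eps -> U s' t'.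

Definition pd1 (f : R -> R -> R) (s t : R) : R :=
  epsilon (inhabits 0) (fun l => derivable_pt_lim (fun x => f x t) s l).
Definition pd2 (f : R -> R -> R) (s t : R) : R :=
  epsilon (inhabits 0) (fun l => derivable_pt_lim (fun y => f s y) t l).

Definition cont2_on (U : R -> R -> Prop) (f : R -> R -> R) : Prop :=
  forall s t, U s t -> forall e, 0 < e -> exists d, 0 < d /\
    forall s' t', Rabs (s' - s) < d -> Rabs (t' - t) < d ->
      Rabs (f s' t' - f s t) < e.

Fixpoint Ck_on (U : R -> R -> Prop) (k : nat) (f : R -> R -> R) : Prop :=
  match k with
  | O => cont2_on U f
  | S k' => cont2_on U f /\
      (forall s t, U s t ->
         (exists l, derivable_pt_lim (fun x => f x t) s l) /\
         (exists l, derivable_pt_lim (fun y => f s y) t l)) /\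
      Ck_on U k' (pd1 f) /\ Ck_on U k' (pd2 f)
  end.

Definition smooth_on (U : R -> R -> Prop) (f : R -> R -> R) : Prop :=
  forall k, Ck_on U k f.

Definition smoothV_on (U : R -> R -> Prop) (F : R -> R -> V4) : Prop :=
  smooth_on U (fun s t => x1 (F s t)) /\ smooth_on U (fun s t => x2 (F s t)) /\
  smooth_on U (fun s t => x3 (F s t)) /\ smooth_on U (fun s t => x4 (F s t)).

Definition pd1V (F : R -> R -> V4) (s t : R) : V4 :=
  mkV4 (pd1 (fun s t => x1 (F s t)) s t) (pd1 (fun s t => x2 (F s t)) s t)
       (pd1 (fun s t => x3 (F s t)) s t) (pd1 (fun s t => x4 (F s t)) s t).
Definition pd2V (F : R -> R -> V4) (s t : R) : V4 :=
  mkV4 (pd2 (fun s t => x1 (F s t)) s t) (pd2 (fun s t => x2 (F s t)) s t)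
       (pd2 (fun s t => x3 (F s t)) s t) (pd2 (fun s t => x4 (F s t)) s t).

Definition pd1B (F : R -> R -> Biv) (s t : R) : Biv :=
  mkBiv (pd1 (fun s t => b12 (F s t)) s t) (pd1 (fun s t => b13 (F s t)) s t)
        (pd1 (fun s t => b14 (F s t)) s t) (pd1 (fun s t => b23 (F s t)) s t)
        (pd1 (fun s t => b24 (F s t)) s t) (pd1 (fun s t => b34 (F s t)) s t).
Definition pd2B (F : R -> R -> Biv) (s t : R) : Biv :=
  mkBiv (pd2 (fun s t => b12 (F s t)) s t) (pd2 (fun s t => b13 (F s t)) s t)
        (pd2 (fun s t => b14 (F s t)) s t) (pd2 (fun s t => b23 (F s t)) s t)
        (pd2 (fun s t => b24 (F s t)) s t) (pd2 (fun s t => b34 (F s t)) s t).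

(* ---------- the surface: an oriented chart X : U -> R^{3,1} ----------
   Tangent vectors at (s,t) are written in the coordinate basis
   (X_s, X_t) as coefficient pairs (a,b); the orientation is the one of
   the chart (X_s, X_t). *)
Section Surf.
Variable X : R -> R -> V4.

Definition Xs := pd1V X.
Definition Xt := pd2V X.
Definition g11 s t := mink (Xs s t) (Xs s t).
Definition g12 s t := mink (Xs s t) (Xt s t).
Definition g22 s t := mink (Xt s t) (Xt s t).
Definition gdet s t := g11 s t * g22 s t - g12 s t * g12 s t.

(* induced metric of signature (1,1) *)
Definition timelike_at s t : Prop := gdet s t < 0.

Definition tvec s t (a b : R) : V4 := vadd (vscal a (Xs s t)) (vscal b (Xt s t)).

Definition tan_coef1 s t (v : V4) : R :=
  (g22 s t * mink v (Xs s t) - g12 s t * mink v (Xt s t)) / gdet s t.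
Definition tan_coef2 s t (v : V4) : R :=
  (- g12 s t * mink v (Xs s t) + g11 s t * mink v (Xt s t)) / gdet s t.
Definition tanpart s t (v : V4) : V4 := tvec s t (tan_coef1 s t v) (tan_coef2 s t v).
Definition norpart s t (v : V4) : V4 := vsub v (tanpart s t v).

Definition N11 s t := norpart s t (pd1V (pd1V X) s t).
Definition N12 s t := norpart s t (pd2V (pd1V X) s t).
Definition N22 s t := norpart s t (pd2V (pd2V X) s t).
Definition II s t (a1 b1 a2 b2 : R) : V4 :=
  vadd (vadd (vscal (a1 * a2) (N11 s t)) (vscal (a1 * b2 + b1 * a2) (N12 s t)))
       (vscal (b1 * b2) (N22 s t)).

(* mean curvature vector (1/2) tr_g II = (1/2) g^{ij} II_ij *)
Definition meancurv s t : V4 :=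
  vscal (/ 2 * / gdet s t)
    (vadd (vadd (vscal (g22 s t) (N11 s t)) (vscal (-2 * g12 s t) (N12 s t)))
          (vscal (g11 s t) (N22 s t))).

Definition pos_orthonormal s t (a1 b1 a2 b2 : R) : Prop :=
  Rabs (mink (tvec s t a1 b1) (tvec s t a1 b1)) = 1 /\
  Rabs (mink (tvec s t a2 b2) (tvec s t a2 b2)) = 1 /\
  mink (tvec s t a1 b1) (tvec s t a2 b2) = 0 /\
  a1 * b2 - b1 * a2 > 0.

Definition Gauss (s t : R) : Biv :=
  epsilon (inhabits bzero) (fun w => exists a1 b1 a2 b2,
     pos_orthonormal s t a1 b1 a2 b2 /\ w = wedge (tvec s t a1 b1) (tvec s t a2 b2)).

Definition dGauss s t (a b : R) : Biv :=
  badd (bscal a (pd1B Gauss s t)) (bscal b (pd2B Gauss s t)).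
Definition GstarH s t (a b : R) : R * R := Hform (dGauss s t a b) (dGauss s t a b).

Definition normal_field (U : R -> R -> Prop) (xi : R -> R -> V4) : Prop :=
  smoothV_on U xi /\
  forall s t, U s t -> mink (xi s t) (Xs s t) = 0 /\ mink (xi s t) (Xt s t) = 0.

Definition nabla1 (xi : R -> R -> V4) s t : V4 := norpart s t (pd1V xi s t).
Definition nabla2 (xi : R -> R -> V4) s t : V4 := norpart s t (pd2V xi s t).

(* R^perp(d_s, d_t) xi  (coordinate fields commute) *)
Definition Rperp (xi : R -> R -> V4) s t : V4 :=
  vsub (nabla1 (nabla2 xi) s t) (nabla2 (nabla1 xi) s t).

End Surf.

Definition minimal_on (U : R -> R -> Prop) (X : R -> R -> V4) : Prop :=
  forall s t, U s t -> meancurv X s t = vzero.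

(* the normal curvature tensor vanishes: R^perp(d_s,d_t) = 0 on all normal fields
   (R^perp is tensorial and skew, so this is R^perp = 0) *)
Definition flat_normal_on (U : R -> R -> Prop) (X : R -> R -> V4) : Prop :=
  forall xi, normal_field X U xi -> forall s t, U s t -> Rperp X xi s t = vzero.

From Stdlib Require Import Reals Lra ClassicalEpsilon.
From Coquelicot Require Import Coquelicot.
Open Scope R_scope.

(* The Gauss map is [G = (-det g)^(-1/2) X_s /\ X_t], and its differential is
   [dG(u) = (-det g)^(-1/2) (II(u, X_s) /\ X_t + X_s /\ II(u, X_t))]: the tangential parts of the
   second derivatives are absorbed by the derivative of the normalising factor.
   Work in the null frame [(l, n)] of the tangent plane with [l = Z^T] and [<l, n> = 1].
   Then [<dG u, dG u>] and [dG u /\ dG u] are multiples of [<II(u,l), II(u,n)>] and of the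
   determinant of [(X_s, X_t, II(u,l), II(u,n))]; as the normal plane is spacelike, [G^*H(u) = 0]
   iff [II(u,l) = 0] or [II(u,n) = 0]. With [II(l,l) <> 0] this says [II(l,n) = II(n,n) = 0].
   But [II(l,n)] is the mean curvature vector and
   [R^perp xi = (<xi, II(n,n)> II(l,l) - <xi, II(l,l)> II(n,n)) / det(l, n)],
   which gives the forward direction.
   Conversely, flatness makes [II(n,n)] parallel to [II(l,l)]. Differentiating the constant
   [Z = Z^T + nu] shows that [nu] is orthogonal to [II(l,l)], hence to [II(n,n)]; as [II(l,n) = 0]
   by minimality, [nu] is orthogonal to all of [II]. So the derivatives of [nu] are normal, and the symmetry of its second derivatives gives
   the Gauss-equation identity [<II(l,l), II(n,n)> = |II(l,n)|^2 = 0], which forces [II(n,n) = 0]. *)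

Lemma is_derive_Rconst (c x : R) : is_derive (fun _ => c) x 0.
Proof. exact (is_derive_const c x). Qed.

Lemma is_derive_Rplus (f g : R -> R) (x df dg : R) : is_derive f x df -> is_derive g x dg ->
  is_derive (fun y => f y + g y) x (df + dg).
Proof. intros Hf Hg. exact (is_derive_plus f g x df dg Hf Hg). Qed.

Lemma is_derive_Rminus (f g : R -> R) (x df dg : R) : is_derive f x df -> is_derive g x dg ->
  is_derive (fun y => f y - g y) x (df - dg).
Proof. intros Hf Hg. exact (is_derive_minus f g x df dg Hf Hg). Qed.

Lemma is_derive_Rmult (f g : R -> R) (x df dg : R) : is_derive f x df -> is_derive g x dg ->
  is_derive (fun y => f y * g y) x (df * g x + f x * dg).
Proof. intros Hf Hg. exact (is_derive_mult f g x df dg Hf Hg Rmult_comm). Qed.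

Lemma is_derive_Rinv (f : R -> R) (x df : R) : is_derive f x df -> f x <> 0 ->
  is_derive (fun y => / f y) x (- df / (f x * f x)).
Proof. intros Hf Hx. replace (f x * f x) with (f x ^ 2) by ring. now apply is_derive_inv. Qed.

Lemma is_derive_val (f : R -> R) (x l l' : R) : is_derive f x l -> l = l' -> is_derive f x l'.
Proof. now intros H <-. Qed.

Lemma is_derive_inv_sqrt_opp (f : R -> R) (x df : R) : is_derive f x df -> f x < 0 ->
  is_derive (fun y => / sqrt (- f y)) x (df / (2 * (- f x) * sqrt (- f x))).
Proof.
  intros Hf Hx.
  assert (Hs : 0 < sqrt (- f x)) by (apply sqrt_lt_R0; lra).
  assert (Hsq := sqrt_sqrt (- f x) ltac:(lra)).
  assert (Hopp : is_derive (fun y => - f y) x (- df)) by exact (is_derive_opp f x df Hf).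
  assert (Hsqrt : is_derive (fun y => sqrt (- f y)) x (- df / (2 * sqrt (- f x)))).
  { apply (is_derive_comp sqrt (fun y => - f y) x (/ (2 * sqrt (- f x))) (- df)); [|exact Hopp].
    apply is_derive_Reals, derivable_pt_lim_sqrt; lra. }
  eapply is_derive_val; [apply (is_derive_Rinv _ _ _ Hsqrt); lra|].
  set (r := sqrt (- f x)) in *. rewrite <- Hsq. field. lra.
Qed.

Lemma is_derive_locally_const (f : R -> R) (x c l : R) :
  locally x (fun y => f y = c) -> is_derive f x l -> l = 0.
Proof.
  intros Hc Hf. apply is_derive_unique in Hf. rewrite <- Hf.
  apply is_derive_unique, (is_derive_ext_loc (fun _ => c)); [|exact (is_derive_Rconst c x)].
  destruct Hc as [d Hd]. exists d. intros y Hy. now rewrite Hd.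
Qed.

Lemma pd1_unique (f : R -> R -> R) (s t l : R) : is_derive (fun x => f x t) s l -> pd1 f s t = l.
Proof.
  intros H. unfold pd1.
  assert (E : exists l, derivable_pt_lim (fun x => f x t) s l) by (exists l; now apply is_derive_Reals).
  apply is_derive_unique in H. rewrite <- H. symmetry.
  apply is_derive_unique, is_derive_Reals, (epsilon_spec _ _ E).
Qed.

Lemma pd2_unique (f : R -> R -> R) (s t l : R) : is_derive (fun y => f s y) t l -> pd2 f s t = l.
Proof.
  intros H. unfold pd2.
  assert (E : exists l, derivable_pt_lim (fun y => f s y) t l) by (exists l; now apply is_derive_Reals).
  apply is_derive_unique in H. rewrite <- H. symmetry.
  apply is_derive_unique, is_derive_Reals, (epsilon_spec _ _ E).
Qed.

Lemma V4_ext (u v : V4) : x1 u = x1 v -> x2 u = x2 v -> x3 u = x3 v -> x4 u = x4 v -> u = v.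
Proof. destruct u, v; simpl; intros; subst; reflexivity. Qed.

Lemma Biv_ext (a b : Biv) : b12 a = b12 b -> b13 a = b13 b -> b14 a = b14 b ->
  b23 a = b23 b -> b24 a = b24 b -> b34 a = b34 b -> a = b.
Proof. destruct a, b; simpl; intros; subst; reflexivity. Qed.

Ltac vext := apply V4_ext; simpl.
Ltac bext := apply Biv_ext; simpl.

Lemma mink_sym u v : mink u v = mink v u.
Proof. unfold mink; ring. Qed.

Lemma mink_addl u v w : mink (vadd u v) w = mink u w + mink v w.
Proof. unfold mink; simpl; ring. Qed.

Lemma mink_addr u v w : mink w (vadd u v) = mink w u + mink w v.
Proof. unfold mink; simpl; ring. Qed.

Lemma mink_scall k u w : mink (vscal k u) w = k * mink u w.
Proof. unfold mink; simpl; ring. Qed.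

Lemma mink_scalr k u w : mink w (vscal k u) = k * mink w u.
Proof. unfold mink; simpl; ring. Qed.

Lemma mink_subl u v w : mink (vsub u v) w = mink u w - mink v w.
Proof. unfold mink; simpl; ring. Qed.

Lemma mink_subr u v w : mink w (vsub u v) = mink w u - mink w v.
Proof. unfold mink; simpl; ring. Qed.

Lemma mink_0l w : mink vzero w = 0.
Proof. unfold mink; simpl; ring. Qed.

Lemma mink_0r w : mink w vzero = 0.
Proof. unfold mink; simpl; ring. Qed.

Ltac mink_expand :=
  repeat rewrite ?mink_addl, ?mink_addr, ?mink_scall, ?mink_scalr,
    ?mink_subl, ?mink_subr, ?mink_0l, ?mink_0r.
Ltac mink_expand_in H :=
  repeat rewrite ?mink_addl, ?mink_addr, ?mink_scall, ?mink_scalr,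
    ?mink_subl, ?mink_subr, ?mink_0l, ?mink_0r in H.

Lemma vscal_eq0 k v : k <> 0 -> vscal k v = vzero -> v = vzero.
Proof.
  intros Hk E. destruct v as [a b c d]. unfold vscal, vzero in *; simpl in *.
  injection E; intros. f_equal; apply (Rmult_eq_reg_l k); lra.
Qed.

Lemma vsub_eq0 u v : vsub u v = vzero -> u = v.
Proof.
  destruct u, v. unfold vsub, vadd, vscal, vzero; simpl. intros E. injection E. intros. f_equal; lra.
Qed.

(* Orthogonal projection onto the plane of a frame [(e1, e2)]; [tvec], [gdet], [tan_coef1],
   [tan_coef2], [tanpart] and [norpart] are these notions for the frame [(Xs X s t, Xt X s t)]. *)
Section Frame.
Variables e1 e2 : V4.

Definition lin (a b : R) : V4 := vadd (vscal a e1) (vscal b e2).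
Definition gram : R := mink e1 e1 * mink e2 e2 - mink e1 e2 * mink e1 e2.
Definition dual_coef1 (m1 m2 : R) : R := (mink e2 e2 * m1 - mink e1 e2 * m2) / gram.
Definition dual_coef2 (m1 m2 : R) : R := (- mink e1 e2 * m1 + mink e1 e1 * m2) / gram.
Definition proj_coef1 (v : V4) : R := dual_coef1 (mink v e1) (mink v e2).
Definition proj_coef2 (v : V4) : R := dual_coef2 (mink v e1) (mink v e2).
Definition tproj (v : V4) : V4 := lin (proj_coef1 v) (proj_coef2 v).
Definition nproj (v : V4) : V4 := vsub v (tproj v).
Definition is_normal (v : V4) : Prop := mink v e1 = 0 /\ mink v e2 = 0.

Lemma mink_lin_r v a b : mink v (lin a b) = a * mink v e1 + b * mink v e2.
Proof. unfold lin. mink_expand. ring. Qed.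

Lemma mink_lin a1 b1 a2 b2 : mink (lin a1 b1) (lin a2 b2) =
  a1 * a2 * mink e1 e1 + (a1 * b2 + b1 * a2) * mink e1 e2 + b1 * b2 * mink e2 e2.
Proof. unfold lin. mink_expand. rewrite (mink_sym e2 e1). ring. Qed.

Lemma mink_lin_normal n a b : is_normal n -> mink n (lin a b) = 0.
Proof. intros [H1 H2]. rewrite mink_lin_r, H1, H2. ring. Qed.

Lemma mink_nproj_normal n v : is_normal n -> mink n (nproj v) = mink n v.
Proof. intros Hn. unfold nproj, tproj. rewrite mink_subr, mink_lin_normal by exact Hn. ring. Qed.

Hypothesis gram_neq0 : gram <> 0.

Lemma mink_lin_dual m1 m2 :
  mink (lin (dual_coef1 m1 m2) (dual_coef2 m1 m2)) e1 = m1 /\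
  mink (lin (dual_coef1 m1 m2) (dual_coef2 m1 m2)) e2 = m2.
Proof.
  unfold lin, dual_coef1, dual_coef2. mink_expand. unfold gram in *.
  rewrite (mink_sym e2 e1). split; field; exact gram_neq0.
Qed.

Lemma nproj_normal v : is_normal (nproj v).
Proof.
  destruct (mink_lin_dual (mink v e1) (mink v e2)) as [H1 H2].
  unfold is_normal, nproj, tproj, proj_coef1, proj_coef2. rewrite !mink_subl, H1, H2. split; ring.
Qed.

Lemma nproj_id v : is_normal v -> nproj v = v.
Proof.
  intros [H1 H2]. unfold nproj, tproj, lin, proj_coef1, proj_coef2, dual_coef1, dual_coef2.
  rewrite H1, H2. vext; field; exact gram_neq0.
Qed.

End Frame.

Lemma tvec_lin X s t a b : tvec X s t a b = lin (Xs X s t) (Xt X s t) a b.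
Proof. reflexivity. Qed.

Lemma norpart_nproj X s t v : norpart X s t v = nproj (Xs X s t) (Xt X s t) v.
Proof. reflexivity. Qed.

Definition is_deriveV (F : R -> V4) (x : R) (L : V4) : Prop :=
  is_derive (fun y => x1 (F y)) x (x1 L) /\ is_derive (fun y => x2 (F y)) x (x2 L) /\
  is_derive (fun y => x3 (F y)) x (x3 L) /\ is_derive (fun y => x4 (F y)) x (x4 L).

Definition is_deriveB (F : R -> Biv) (x : R) (L : Biv) : Prop :=
  is_derive (fun y => b12 (F y)) x (b12 L) /\ is_derive (fun y => b13 (F y)) x (b13 L) /\
  is_derive (fun y => b14 (F y)) x (b14 L) /\ is_derive (fun y => b23 (F y)) x (b23 L) /\
  is_derive (fun y => b24 (F y)) x (b24 L) /\ is_derive (fun y => b34 (F y)) x (b34 L).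

Lemma is_deriveV_val (F : R -> V4) (x : R) (L L' : V4) :
  is_deriveV F x L -> L = L' -> is_deriveV F x L'.
Proof. now intros H <-. Qed.

Lemma is_deriveB_val (F : R -> Biv) (x : R) (L L' : Biv) :
  is_deriveB F x L -> L = L' -> is_deriveB F x L'.
Proof. now intros H <-. Qed.

Lemma is_deriveV_const (C : V4) (x : R) : is_deriveV (fun _ => C) x vzero.
Proof. split; [|split; [|split]]; exact (is_derive_Rconst _ x). Qed.

Lemma is_deriveV_add (F G : R -> V4) (x : R) (L M : V4) : is_deriveV F x L -> is_deriveV G x M ->
  is_deriveV (fun y => vadd (F y) (G y)) x (vadd L M).
Proof.
  intros [F1 [F2 [F3 F4]]] [G1 [G2 [G3 G4]]].
  split; [|split; [|split]]; simpl; now apply is_derive_Rplus.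
Qed.

Lemma is_deriveV_scal (f : R -> R) (F : R -> V4) (x l : R) (L : V4) :
  is_derive f x l -> is_deriveV F x L ->
  is_deriveV (fun y => vscal (f y) (F y)) x (vadd (vscal l (F x)) (vscal (f x) L)).
Proof.
  intros Hf [F1 [F2 [F3 F4]]].
  split; [|split; [|split]]; simpl; now apply is_derive_Rmult.
Qed.

Lemma is_deriveV_sub (F G : R -> V4) (x : R) (L M : V4) : is_deriveV F x L -> is_deriveV G x M ->
  is_deriveV (fun y => vsub (F y) (G y)) x (vsub L M).
Proof.
  intros HF HG.
  assert (HG' := is_deriveV_scal (fun _ => -1) G x 0 M (is_derive_Rconst _ x) HG).
  eapply is_deriveV_val; [exact (is_deriveV_add _ _ _ _ _ HF HG')|].
  unfold vsub. vext; ring.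
Qed.

Lemma is_derive_mink (F G : R -> V4) (x : R) (L M : V4) : is_deriveV F x L -> is_deriveV G x M ->
  is_derive (fun y => mink (F y) (G y)) x (mink L (G x) + mink (F x) M).
Proof.
  intros [F1 [F2 [F3 F4]]] [G1 [G2 [G3 G4]]].
  assert (H := is_derive_Rplus _ _ _ _ _ (is_derive_Rplus _ _ _ _ _ (is_derive_Rplus _ _ _ _ _
    (is_derive_Rmult _ _ _ _ _ (is_derive_Rmult _ _ _ _ _ (is_derive_Rconst (-1) x) F1) G1)
    (is_derive_Rmult _ _ _ _ _ F2 G2)) (is_derive_Rmult _ _ _ _ _ F3 G3))
    (is_derive_Rmult _ _ _ _ _ F4 G4)).
  eapply is_derive_val; [eapply is_derive_ext; [|exact H]|]; intros; unfold mink; simpl; ring.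
Qed.

Lemma mink_derive_locally_const (F E : R -> V4) (x : R) (A B : V4) (c : R) :
  is_deriveV F x A -> is_deriveV E x B ->
  locally x (fun y => mink (F y) (E y) = c) -> mink A (E x) = - mink (F x) B.
Proof.
  intros HF HE Hc. assert (H := is_derive_locally_const _ _ _ _ Hc (is_derive_mink _ _ _ _ _ HF HE)).
  lra.
Qed.

Lemma is_deriveB_ext_loc (F G : R -> Biv) (x : R) (L : Biv) : locally x (fun y => F y = G y) ->
  is_deriveB F x L -> is_deriveB G x L.
Proof.
  intros [d Hd] [F1 [F2 [F3 [F4 [F5 F6]]]]].
  split; [|split; [|split; [|split; [|split]]]]; eapply is_derive_ext_loc; try eassumption;
    exists d; intros y Hy; now rewrite (Hd y Hy).
Qed.

Lemma is_deriveB_scal_wedge (f : R -> R) (E F : R -> V4) (x l : R) (A B : V4) :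
  is_derive f x l -> is_deriveV E x A -> is_deriveV F x B ->
  is_deriveB (fun y => bscal (f y) (wedge (E y) (F y))) x
    (badd (bscal l (wedge (E x) (F x))) (bscal (f x) (badd (wedge A (F x)) (wedge (E x) B)))).
Proof.
  intros Hf [E1 [E2 [E3 E4]]] [F1 [F2 [F3 F4]]].
  split; [|split; [|split; [|split; [|split]]]]; simpl;
    (eapply is_derive_val;
      [apply is_derive_Rmult; [exact Hf | apply is_derive_Rminus; apply is_derive_Rmult; eassumption]
      | cbv beta; ring]).
Qed.

Lemma pd1V_unique (F : R -> R -> V4) (s t : R) (L : V4) :
  is_deriveV (fun x => F x t) s L -> pd1V F s t = L.
Proof. intros [F1 [F2 [F3 F4]]]. destruct L; unfold pd1V. f_equal; now apply pd1_unique. Qed.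

Lemma pd2V_unique (F : R -> R -> V4) (s t : R) (L : V4) :
  is_deriveV (fun y => F s y) t L -> pd2V F s t = L.
Proof. intros [F1 [F2 [F3 F4]]]. destruct L; unfold pd2V. f_equal; now apply pd2_unique. Qed.

Lemma pd1B_unique (F : R -> R -> Biv) (s t : R) (L : Biv) :
  is_deriveB (fun x => F x t) s L -> pd1B F s t = L.
Proof. intros [F1 [F2 [F3 [F4 [F5 F6]]]]]. destruct L; unfold pd1B. f_equal; now apply pd1_unique. Qed.

Lemma pd2B_unique (F : R -> R -> Biv) (s t : R) (L : Biv) :
  is_deriveB (fun y => F s y) t L -> pd2B F s t = L.
Proof. intros [F1 [F2 [F3 [F4 [F5 F6]]]]]. destruct L; unfold pd2B. f_equal; now apply pd2_unique. Qed.

Section Smoothness.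
Variable U : R -> R -> Prop.
Hypothesis HU : open2 U.

Lemma open2_locally1 s t : U s t -> locally s (fun x => U x t).
Proof.
  intros H. destruct (HU s t H) as [e [He H']]. exists (mkposreal e He).
  intros y Hy. apply H'; [exact Hy|]. rewrite Rminus_diag, Rabs_R0; exact He.
Qed.

Lemma open2_locally2 s t : U s t -> locally t (fun y => U s y).
Proof.
  intros H. destruct (HU s t H) as [e [He H']]. exists (mkposreal e He).
  intros y Hy. apply H'; [|exact Hy]. rewrite Rminus_diag, Rabs_R0; exact He.
Qed.

Lemma open2_locally_2d s t : U s t -> locally_2d U s t.
Proof.
  intros H. destruct (HU s t H) as [e [He H']]. exists (mkposreal e He). intros; now apply H'.
Qed.

Lemma cont2_on_continuity_2d f : cont2_on U f <-> forall s t, U s t -> continuity_2d_pt f s t.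
Proof.
  split.
  - intros H s t Hst eps. destruct (H s t Hst eps (cond_pos eps)) as [d [Hd H']].
    exists (mkposreal d Hd). intros; now apply H'.
  - intros H s t Hst e He. destruct (H s t Hst (mkposreal e He)) as [[d Hd] H'].
    now exists d.
Qed.

Lemma Ck_on_continuity_2d k f s t : Ck_on U k f -> U s t -> continuity_2d_pt f s t.
Proof. destruct k; intros H; apply cont2_on_continuity_2d; [exact H | apply H]. Qed.

Lemma Ck_on_is_derive1 k f s t : Ck_on U (S k) f -> U s t ->
  is_derive (fun x => f x t) s (pd1 f s t).
Proof.
  intros [_ [H _]] Hst. destruct (H s t Hst) as [E _].
  apply is_derive_Reals, (epsilon_spec _ _ E).
Qed.

Lemma Ck_on_is_derive2 k f s t : Ck_on U (S k) f -> U s t ->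
  is_derive (fun y => f s y) t (pd2 f s t).
Proof.
  intros [_ [H _]] Hst. destruct (H s t Hst) as [_ E].
  apply is_derive_Reals, (epsilon_spec _ _ E).
Qed.

Lemma Ck_on_pred k f : Ck_on U (S k) f -> Ck_on U k f.
Proof.
  revert f; induction k; intros f H; [apply H|].
  destruct H as [H1 [H2 [H3 H4]]]. split; [|split; [|split]]; auto.
Qed.

Local Ltac derive_at :=
  match goal with
  | Hst : U ?s ?t, Hf : Ck_on U (S _) ?f |- _ =>
      first [exact (Ck_on_is_derive1 _ f s t Hf Hst) | exact (Ck_on_is_derive2 _ f s t Hf Hst)]
  end.

Lemma Ck_on_ext k : forall f g, (forall s t, U s t -> f s t = g s t) ->
  Ck_on U k f -> Ck_on U k g.
Proof.
  assert (C : forall m f g, (forall s t, U s t -> f s t = g s t) -> Ck_on U m f -> cont2_on U g).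
  { intros m f g E H. apply cont2_on_continuity_2d. intros s t Hst.
    apply continuity_2d_pt_ext_loc with f; [|exact (Ck_on_continuity_2d m f s t H Hst)].
    destruct (open2_locally_2d s t Hst) as [d Hd]. exists d. intros; apply E, Hd; auto. }
  induction k; intros f g E H; [exact (C 0%nat f g E H)|].
  assert (D1 : forall s t, U s t -> is_derive (fun x => g x t) s (pd1 f s t)).
  { intros s t Hst. apply (is_derive_ext_loc (fun x => f x t)); [|derive_at].
    destruct (open2_locally1 s t Hst) as [d Hd]. exists d. intros; apply E, Hd; auto. }
  assert (D2 : forall s t, U s t -> is_derive (fun y => g s y) t (pd2 f s t)).
  { intros s t Hst. apply (is_derive_ext_loc (fun y => f s y)); [|derive_at].
    destruct (open2_locally2 s t Hst) as [d Hd]. exists d. intros; apply E, Hd; auto. }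
  split; [exact (C _ f g E H)|split; [|split]].
  - intros s t Hst. split; [exists (pd1 f s t) | exists (pd2 f s t)]; apply is_derive_Reals; auto.
  - apply IHk with (pd1 f); [|apply H]. intros s t Hst; symmetry; apply pd1_unique; auto.
  - apply IHk with (pd2 f); [|apply H]. intros s t Hst; symmetry; apply pd2_unique; auto.
Qed.

Lemma Ck_on_succ k f (d1 d2 : R -> R -> R) :
  cont2_on U f ->
  (forall s t, U s t -> is_derive (fun x => f x t) s (d1 s t)) ->
  (forall s t, U s t -> is_derive (fun y => f s y) t (d2 s t)) ->
  Ck_on U k d1 -> Ck_on U k d2 -> Ck_on U (S k) f.
Proof.
  intros C D1 D2 K1 K2. split; [exact C|split; [|split]].
  - intros s t Hst. split; [exists (d1 s t) | exists (d2 s t)]; apply is_derive_Reals; auto.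
  - apply (Ck_on_ext k d1); [|exact K1]. intros s t Hst; symmetry; apply pd1_unique; auto.
  - apply (Ck_on_ext k d2); [|exact K2]. intros s t Hst; symmetry; apply pd2_unique; auto.
Qed.

Lemma Ck_on_const k c : Ck_on U k (fun _ _ => c).
Proof.
  assert (C : forall c, cont2_on U (fun _ _ => c))
    by (intros; apply cont2_on_continuity_2d; intros; apply continuity_2d_pt_const).
  revert c; induction k; intros c; [apply C|].
  apply (Ck_on_succ k _ (fun _ _ => 0) (fun _ _ => 0)); auto.
  - intros s t _. exact (is_derive_Rconst c s).
  - intros s t _. exact (is_derive_Rconst c t).
Qed.

Lemma Ck_on_plus k : forall f g, Ck_on U k f -> Ck_on U k g ->
  Ck_on U k (fun s t => f s t + g s t).
Proof.
  assert (C : forall m f g, Ck_on U m f -> Ck_on U m g -> cont2_on U (fun s t => f s t + g s t)).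
  { intros m f g Hf Hg. apply cont2_on_continuity_2d. intros s t Hst.
    apply continuity_2d_pt_plus;
      [exact (Ck_on_continuity_2d m f s t Hf Hst) | exact (Ck_on_continuity_2d m g s t Hg Hst)]. }
  induction k; intros f g Hf Hg; [exact (C _ f g Hf Hg)|].
  apply (Ck_on_succ k _ (fun s t => pd1 f s t + pd1 g s t) (fun s t => pd2 f s t + pd2 g s t)).
  - exact (C _ f g Hf Hg).
  - intros s t Hst. apply is_derive_Rplus; derive_at.
  - intros s t Hst. apply is_derive_Rplus; derive_at.
  - apply IHk; [apply Hf | apply Hg].
  - apply IHk; [apply Hf | apply Hg].
Qed.

Lemma Ck_on_mult k : forall f g, Ck_on U k f -> Ck_on U k g ->
  Ck_on U k (fun s t => f s t * g s t).
Proof.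
  assert (C : forall m f g, Ck_on U m f -> Ck_on U m g -> cont2_on U (fun s t => f s t * g s t)).
  { intros m f g Hf Hg. apply cont2_on_continuity_2d. intros s t Hst.
    apply continuity_2d_pt_mult;
      [exact (Ck_on_continuity_2d m f s t Hf Hst) | exact (Ck_on_continuity_2d m g s t Hg Hst)]. }
  induction k; intros f g Hf Hg; [exact (C _ f g Hf Hg)|].
  apply (Ck_on_succ k _ (fun s t => pd1 f s t * g s t + f s t * pd1 g s t)
                        (fun s t => pd2 f s t * g s t + f s t * pd2 g s t)).
  - exact (C _ f g Hf Hg).
  - intros s t Hst. apply (is_derive_Rmult (fun x => f x t) (fun x => g x t)); derive_at.
  - intros s t Hst. apply (is_derive_Rmult (fun y => f s y) (fun y => g s y)); derive_at.
  - apply Ck_on_plus; apply IHk; (apply Ck_on_pred; assumption) || apply Hf || apply Hg.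
  - apply Ck_on_plus; apply IHk; (apply Ck_on_pred; assumption) || apply Hf || apply Hg.
Qed.

Lemma Ck_on_inv k : forall f, (forall s t, U s t -> f s t <> 0) -> Ck_on U k f ->
  Ck_on U k (fun s t => / f s t).
Proof.
  assert (C : forall m f, (forall s t, U s t -> f s t <> 0) -> Ck_on U m f ->
    cont2_on U (fun s t => / f s t)).
  { intros m f Hnz Hf. apply cont2_on_continuity_2d. intros s t Hst.
    apply continuity_2d_pt_inv; [exact (Ck_on_continuity_2d m f s t Hf Hst) | auto]. }
  induction k; intros f Hnz Hf; [exact (C _ f Hnz Hf)|].
  assert (Hinv2 : Ck_on U k (fun s t => / f s t * / f s t))
    by (apply Ck_on_mult; apply IHk; auto; now apply Ck_on_pred).
  apply (Ck_on_succ k _ (fun s t => (-1 * pd1 f s t) * (/ f s t * / f s t))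
                        (fun s t => (-1 * pd2 f s t) * (/ f s t * / f s t))).
  - exact (C _ f Hnz Hf).
  - intros s t Hst. eapply is_derive_val; [apply (is_derive_Rinv (fun x => f x t)); [derive_at|auto]|].
    field; auto.
  - intros s t Hst. eapply is_derive_val; [apply (is_derive_Rinv (fun y => f s y)); [derive_at|auto]|].
    field; auto.
  - apply Ck_on_mult; [apply Ck_on_mult; [apply Ck_on_const | apply Hf] | exact Hinv2].
  - apply Ck_on_mult; [apply Ck_on_mult; [apply Ck_on_const | apply Hf] | exact Hinv2].
Qed.

Lemma smooth_on_is_derive1 f s t : smooth_on U f -> U s t ->
  is_derive (fun x => f x t) s (pd1 f s t).
Proof. intros H Hst. exact (Ck_on_is_derive1 0 f s t (H 1%nat) Hst). Qed.

Lemma smooth_on_is_derive2 f s t : smooth_on U f -> U s t ->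
  is_derive (fun y => f s y) t (pd2 f s t).
Proof. intros H Hst. exact (Ck_on_is_derive2 0 f s t (H 1%nat) Hst). Qed.

Lemma smooth_on_pd1 f : smooth_on U f -> smooth_on U (pd1 f).
Proof. intros H k. apply (H (S k)). Qed.

Lemma smooth_on_pd2 f : smooth_on U f -> smooth_on U (pd2 f).
Proof. intros H k. apply (H (S k)). Qed.

Lemma smooth_on_ext f g : (forall s t, U s t -> f s t = g s t) -> smooth_on U f -> smooth_on U g.
Proof. intros E H k. exact (Ck_on_ext k f g E (H k)). Qed.

Lemma smooth_on_const c : smooth_on U (fun _ _ => c).
Proof. intros k. apply Ck_on_const. Qed.

Lemma smooth_on_plus f g : smooth_on U f -> smooth_on U g -> smooth_on U (fun s t => f s t + g s t).
Proof. intros Hf Hg k. now apply Ck_on_plus. Qed.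

Lemma smooth_on_mult f g : smooth_on U f -> smooth_on U g -> smooth_on U (fun s t => f s t * g s t).
Proof. intros Hf Hg k. now apply Ck_on_mult. Qed.

Lemma smooth_on_opp f : smooth_on U f -> smooth_on U (fun s t => - f s t).
Proof.
  intros Hf. apply (smooth_on_ext (fun s t => -1 * f s t)); [intros; ring|].
  apply smooth_on_mult; [apply smooth_on_const | exact Hf].
Qed.

Lemma smooth_on_minus f g : smooth_on U f -> smooth_on U g -> smooth_on U (fun s t => f s t - g s t).
Proof. intros Hf Hg. apply smooth_on_plus; [exact Hf | now apply smooth_on_opp]. Qed.

Lemma smooth_on_div f g : (forall s t, U s t -> g s t <> 0) ->
  smooth_on U f -> smooth_on U g -> smooth_on U (fun s t => f s t / g s t).
Proof. intros Hnz Hf Hg. apply smooth_on_mult; [exact Hf | intros k; now apply Ck_on_inv]. Qed.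

Lemma Derive_pd1 f s t : smooth_on U f -> U s t -> Derive (fun x => f x t) s = pd1 f s t.
Proof. intros; now apply is_derive_unique, smooth_on_is_derive1. Qed.

Lemma Derive_pd2 f s t : smooth_on U f -> U s t -> Derive (fun y => f s y) t = pd2 f s t.
Proof. intros; now apply is_derive_unique, smooth_on_is_derive2. Qed.

Lemma pd1_pd2 f s t : smooth_on U f -> U s t -> pd1 (pd2 f) s t = pd2 (pd1 f) s t.
Proof.
  intros Hf Hst.
  assert (E12 : forall u v, U u v ->
    Derive (fun z => Derive (fun y => f z y) v) u = pd1 (pd2 f) u v).
  { intros u v Huv. rewrite <- (Derive_pd1 (pd2 f)) by (auto using smooth_on_pd2).
    apply Derive_ext_loc. destruct (open2_locally1 u v Huv) as [e He].
    exists e. intros y Hy. now apply Derive_pd2, He. }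
  assert (E21 : forall u v, U u v ->
    Derive (fun z => Derive (fun x => f x z) u) v = pd2 (pd1 f) u v).
  { intros u v Huv. rewrite <- (Derive_pd2 (pd1 f)) by (auto using smooth_on_pd1).
    apply Derive_ext_loc. destruct (open2_locally2 u v Huv) as [e He].
    exists e. intros y Hy. now apply Derive_pd1, He. }
  destruct (open2_locally_2d s t Hst) as [d Hd].
  rewrite <- E12, <- E21 by exact Hst. apply Schwarz.
  - exists d. intros u v Hu Hv. assert (Huv : U u v) by now apply Hd.
    split; [|split; [|split]].
    + eexists; now apply smooth_on_is_derive1.
    + eexists; now apply smooth_on_is_derive2.
    + eexists. apply (is_derive_ext_loc (fun z => pd2 f z v)).
      * destruct (open2_locally1 u v Huv) as [e He]. exists e. intros y Hy.
        symmetry; now apply Derive_pd2, He.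
      * apply smooth_on_is_derive1; auto using smooth_on_pd2.
    + eexists. apply (is_derive_ext_loc (fun z => pd1 f u z)).
      * destruct (open2_locally2 u v Huv) as [e He]. exists e. intros y Hy.
        symmetry; now apply Derive_pd1, He.
      * apply smooth_on_is_derive2; auto using smooth_on_pd1.
  - apply continuity_2d_pt_ext_loc with (pd1 (pd2 f)).
    + exists d. intros u v Hu Hv. symmetry; now apply E12, Hd.
    + exact (Ck_on_continuity_2d 0 _ s t (smooth_on_pd1 _ (smooth_on_pd2 _ Hf) 0%nat) Hst).
  - apply continuity_2d_pt_ext_loc with (pd2 (pd1 f)).
    + exists d. intros u v Hu Hv. symmetry; now apply E21, Hd.
    + exact (Ck_on_continuity_2d 0 _ s t (smooth_on_pd2 _ (smooth_on_pd1 _ Hf) 0%nat) Hst).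
Qed.

Lemma smoothV_on_is_deriveV1 F s t : smoothV_on U F -> U s t ->
  is_deriveV (fun x => F x t) s (pd1V F s t).
Proof. intros [H1 [H2 [H3 H4]]] Hst. split; [|split; [|split]]; now apply smooth_on_is_derive1. Qed.

Lemma smoothV_on_is_deriveV2 F s t : smoothV_on U F -> U s t ->
  is_deriveV (fun y => F s y) t (pd2V F s t).
Proof. intros [H1 [H2 [H3 H4]]] Hst. split; [|split; [|split]]; now apply smooth_on_is_derive2. Qed.

Lemma smoothV_on_pd1V F : smoothV_on U F -> smoothV_on U (pd1V F).
Proof. intros [H1 [H2 [H3 H4]]]. split; [|split; [|split]]; now apply smooth_on_pd1. Qed.

Lemma smoothV_on_pd2V F : smoothV_on U F -> smoothV_on U (pd2V F).
Proof. intros [H1 [H2 [H3 H4]]]. split; [|split; [|split]]; now apply smooth_on_pd2. Qed.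

Lemma smoothV_on_const C : smoothV_on U (fun _ _ => C).
Proof. split; [|split; [|split]]; apply smooth_on_const. Qed.

Lemma smoothV_on_add F G : smoothV_on U F -> smoothV_on U G ->
  smoothV_on U (fun s t => vadd (F s t) (G s t)).
Proof. intros [F1 [F2 [F3 F4]]] [G1 [G2 [G3 G4]]]. split; [|split; [|split]]; now apply smooth_on_plus. Qed.

Lemma smoothV_on_scal f F : smooth_on U f -> smoothV_on U F ->
  smoothV_on U (fun s t => vscal (f s t) (F s t)).
Proof. intros Hf [F1 [F2 [F3 F4]]]. split; [|split; [|split]]; now apply smooth_on_mult. Qed.

Lemma smoothV_on_sub F G : smoothV_on U F -> smoothV_on U G ->
  smoothV_on U (fun s t => vsub (F s t) (G s t)).
Proof.
  intros HF HG. apply smoothV_on_add; [exact HF|].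
  apply smoothV_on_scal; [apply smooth_on_const | exact HG].
Qed.

Lemma smooth_on_mink F G : smoothV_on U F -> smoothV_on U G ->
  smooth_on U (fun s t => mink (F s t) (G s t)).
Proof.
  intros [F1 [F2 [F3 F4]]] [G1 [G2 [G3 G4]]]. unfold mink.
  repeat apply smooth_on_plus; repeat apply smooth_on_mult; auto. now apply smooth_on_opp.
Qed.

Lemma pd1V_pd2V F s t : smoothV_on U F -> U s t -> pd1V (pd2V F) s t = pd2V (pd1V F) s t.
Proof. intros [H1 [H2 [H3 H4]]] Hst. unfold pd1V, pd2V; simpl. f_equal; now apply pd1_pd2. Qed.

End Smoothness.

(** * The Gauss map *)

Lemma wedge_lin e1 e2 a1 b1 a2 b2 :
  wedge (lin e1 e2 a1 b1) (lin e1 e2 a2 b2) = bscal (a1 * b2 - b1 * a2) (wedge e1 e2).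
Proof. unfold lin. bext; ring. Qed.

Lemma mink_lin_scale e1 e2 k k' a1 b1 a2 b2 :
  mink (lin e1 e2 (k * a1) (k * b1)) (lin e1 e2 (k' * a2) (k' * b2)) =
  k * k' * mink (lin e1 e2 a1 b1) (lin e1 e2 a2 b2).
Proof. rewrite !mink_lin. ring. Qed.

Lemma Rabs_unit_rescale m : m <> 0 -> Rabs (/ sqrt (Rabs m) * / sqrt (Rabs m) * m) = 1.
Proof.
  intros Hm. assert (Hp : 0 < Rabs m) by now apply Rabs_pos_lt.
  rewrite <- Rinv_mult, sqrt_sqrt by lra.
  rewrite Rabs_mult, Rabs_inv, Rabs_Rabsolu. field. lra.
Qed.

Section GaussMap.
Variable X : R -> R -> V4.
Variables s t : R.
Hypothesis timelike : gdet X s t < 0.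

Local Notation e1 := (Xs X s t).
Local Notation e2 := (Xt X s t).

Lemma exists_nonnull_tangent : exists a b, mink (lin e1 e2 a b) (lin e1 e2 a b) <> 0.
Proof.
  change (gram e1 e2 < 0) in timelike. unfold gram in timelike.
  setoid_rewrite mink_lin.
  destruct (Req_dec (mink e1 e1) 0) as [H11|H11]; [destruct (Req_dec (mink e2 e2) 0) as [H22|H22]|].
  - exists 1, 1. rewrite H11, H22 in *. nra.
  - exists 0, 1. nra.
  - exists 1, 0. nra.
Qed.

(* [(c1, c2)] is [g]-orthogonal to the non-null [(w1, w2)] and [<c, c> = gdet <w, w>]; rescale both. *)
Lemma pos_orthonormal_exists : exists a1 b1 a2 b2, pos_orthonormal X s t a1 b1 a2 b2.
Proof.
  destruct exists_nonnull_tangent as [w1 [w2 Hq]].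
  set (q := mink (lin e1 e2 w1 w2) (lin e1 e2 w1 w2)) in *.
  set (c1 := - (mink e1 e2 * w1 + mink e2 e2 * w2)). set (c2 := mink e1 e1 * w1 + mink e1 e2 * w2).
  set (Q := mink (lin e1 e2 c1 c2) (lin e1 e2 c1 c2)).
  assert (HQ : Q = gdet X s t * q)
    by (unfold Q, q, c1, c2; rewrite !mink_lin; unfold gdet, g11, g12, g22; ring).
  assert (Horth : mink (lin e1 e2 w1 w2) (lin e1 e2 c1 c2) = 0) by (unfold c1, c2; rewrite mink_lin; ring).
  assert (Hdet : w1 * c2 - w2 * c1 = q) by (unfold q, c1, c2; rewrite mink_lin; ring).
  assert (HQ0 : Q <> 0) by (rewrite HQ; apply Rmult_integral_contrapositive; split; lra).
  set (k1 := / sqrt (Rabs q)). set (k2 := (if Rlt_dec 0 q then 1 else -1) * / sqrt (Rabs Q)).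
  assert (Hk1 : 0 < k1) by (apply Rinv_0_lt_compat, sqrt_lt_R0, Rabs_pos_lt; exact Hq).
  assert (Hk2 : 0 < k2 * q).
  { assert (0 < / sqrt (Rabs Q)) by (apply Rinv_0_lt_compat, sqrt_lt_R0, Rabs_pos_lt; exact HQ0).
    unfold k2. destruct (Rlt_dec 0 q); nra. }
  exists (k1 * w1), (k1 * w2), (k2 * c1), (k2 * c2). unfold pos_orthonormal. rewrite !tvec_lin.
  rewrite !mink_lin_scale.
  split; [|split; [|split]].
  - now apply Rabs_unit_rescale.
  - replace (k2 * k2) with (/ sqrt (Rabs Q) * / sqrt (Rabs Q)) by (unfold k2; destruct (Rlt_dec 0 q); ring).
    now apply Rabs_unit_rescale.
  - rewrite Horth. ring.
  - apply Rlt_gt.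
    replace (k1 * w1 * (k2 * c2) - k1 * w2 * (k2 * c1)) with (k1 * (k2 * q)) by (rewrite <- Hdet; ring).
    now apply Rmult_lt_0_compat.
Qed.

Lemma pos_orthonormal_det a1 b1 a2 b2 : pos_orthonormal X s t a1 b1 a2 b2 ->
  a1 * b2 - b1 * a2 = / sqrt (- gdet X s t).
Proof.
  intros [H1 [H2 [H3 H4]]]. rewrite !tvec_lin in *.
  set (d := a1 * b2 - b1 * a2) in *.
  set (m1 := mink (lin e1 e2 a1 b1) (lin e1 e2 a1 b1)) in *.
  set (m2 := mink (lin e1 e2 a2 b2) (lin e1 e2 a2 b2)) in *.
  assert (E : d * d * gdet X s t = m1 * m2 - mink (lin e1 e2 a1 b1) (lin e1 e2 a2 b2) ^ 2)
    by (unfold d, m1, m2; rewrite !mink_lin; unfold gdet, g11, g12, g22; ring).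
  rewrite H3 in E.
  assert (Hm : m1 * m2 = -1).
  { revert H1 H2 E. unfold Rabs. destruct (Rcase_abs m1), (Rcase_abs m2); intros; nra. }
  assert (Hd2 : d * d = / (- gdet X s t)) by (field_simplify_eq; nra).
  assert (Hs : 0 < sqrt (- gdet X s t)) by (apply sqrt_lt_R0; lra).
  assert (Hss := sqrt_sqrt (- gdet X s t) ltac:(lra)).
  apply Rsqr_inj; [lra | left; now apply Rinv_0_lt_compat |].
  unfold Rsqr. rewrite Hd2, <- Hss at 1. field. lra.
Qed.

Lemma Gauss_eq : Gauss X s t = bscal (/ sqrt (- gdet X s t)) (wedge e1 e2).
Proof.
  unfold Gauss.
  assert (E : exists w, exists a1 b1 a2 b2, pos_orthonormal X s t a1 b1 a2 b2 /\
      w = wedge (tvec X s t a1 b1) (tvec X s t a2 b2)).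
  { destruct pos_orthonormal_exists as [a1 [b1 [a2 [b2 H]]]].
    eexists; exists a1, b1, a2, b2; split; eauto. }
  destruct (epsilon_spec (inhabits bzero) _ E) as [a1 [b1 [a2 [b2 [H1 ->]]]]].
  now rewrite !tvec_lin, wedge_lin, (pos_orthonormal_det _ _ _ _ H1).
Qed.

End GaussMap.

Lemma is_derive_gram (E1 E2 : R -> V4) (x : R) (A B : V4) :
  is_deriveV E1 x A -> is_deriveV E2 x B ->
  is_derive (fun y => gram (E1 y) (E2 y)) x
    (2 * (mink A (E1 x) * mink (E2 x) (E2 x) + mink (E1 x) (E1 x) * mink B (E2 x)
          - mink (E1 x) (E2 x) * (mink A (E2 x) + mink B (E1 x)))).
Proof.
  intros HA HB. unfold gram.
  assert (H := is_derive_Rminus _ _ _ _ _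
    (is_derive_Rmult _ _ _ _ _ (is_derive_mink _ _ _ _ _ HA HA) (is_derive_mink _ _ _ _ _ HB HB))
    (is_derive_Rmult _ _ _ _ _ (is_derive_mink _ _ _ _ _ HA HB) (is_derive_mink _ _ _ _ _ HA HB))).
  eapply is_derive_val; [exact H|]. rewrite !(mink_sym (E1 x) A), !(mink_sym (E2 x) B), (mink_sym (E1 x) B).
  ring.
Qed.

(* The tangential parts of [A] and [B] only move [E1 /\ E2] along itself, and this is exactly
   compensated by the derivative of the normalising factor. *)
Lemma is_deriveB_unit_wedge (E1 E2 : R -> V4) (x : R) (A B : V4) :
  is_deriveV E1 x A -> is_deriveV E2 x B -> gram (E1 x) (E2 x) < 0 ->
  is_deriveB (fun y => bscal (/ sqrt (- gram (E1 y) (E2 y))) (wedge (E1 y) (E2 y))) x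
    (bscal (/ sqrt (- gram (E1 x) (E2 x)))
       (badd (wedge (nproj (E1 x) (E2 x) A) (E2 x)) (wedge (E1 x) (nproj (E1 x) (E2 x) B)))).
Proof.
  intros HA HB Hg.
  eapply is_deriveB_val.
  { apply is_deriveB_scal_wedge; [|exact HA|exact HB].
    exact (is_derive_inv_sqrt_opp _ _ _ (is_derive_gram _ _ _ _ _ HA HB) Hg). }
  cbv beta. set (e1 := E1 x) in *. set (e2 := E2 x) in *.
  assert (Hs : 0 < sqrt (- gram e1 e2)) by (apply sqrt_lt_R0; lra).
  assert (Hss := sqrt_sqrt (- gram e1 e2) ltac:(lra)).
  set (c1 := proj_coef1 e1 e2 A). set (c2 := proj_coef2 e1 e2 B).
  assert (Hphi : 2 * (mink A e1 * mink e2 e2 + mink e1 e1 * mink B e2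
                      - mink e1 e2 * (mink A e2 + mink B e1)) / (2 * - gram e1 e2 * sqrt (- gram e1 e2))
                 = - / sqrt (- gram e1 e2) * (c1 + c2)).
  { unfold c1, c2, proj_coef1, proj_coef2, dual_coef1, dual_coef2.
    rewrite (mink_sym B e1). field. split; lra. }
  rewrite Hphi. unfold nproj, tproj, lin. fold c1 c2. bext; ring.
Qed.

Lemma is_deriveV_nproj (E1 E2 V : R -> V4) (x : R) (A B C : V4) (c1' c2' : R) :
  is_deriveV E1 x A -> is_deriveV E2 x B -> is_deriveV V x C ->
  is_derive (fun y => proj_coef1 (E1 y) (E2 y) (V y)) x c1' ->
  is_derive (fun y => proj_coef2 (E1 y) (E2 y) (V y)) x c2' ->
  is_deriveV (fun y => nproj (E1 y) (E2 y) (V y)) x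
    (vsub C (vadd (vadd (vscal c1' (E1 x)) (vscal (proj_coef1 (E1 x) (E2 x) (V x)) A))
                  (vadd (vscal c2' (E2 x)) (vscal (proj_coef2 (E1 x) (E2 x) (V x)) B)))).
Proof.
  intros HA HB HC H1 H2. unfold nproj, tproj, lin.
  apply is_deriveV_sub; [exact HC|].
  apply is_deriveV_add; apply is_deriveV_scal; assumption.
Qed.

Lemma nproj_tangent_combination e1 e2 (C A B : V4) (p q r w : R) : gram e1 e2 <> 0 ->
  nproj e1 e2 (vsub C (vadd (vadd (vscal p e1) (vscal q A)) (vadd (vscal r e2) (vscal w B)))) =
  vsub (nproj e1 e2 C) (vadd (vscal q (nproj e1 e2 A)) (vscal w (nproj e1 e2 B))).
Proof.
  intros Hg. unfold nproj, tproj, lin, proj_coef1, proj_coef2, dual_coef1, dual_coef2, gram in *.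
  mink_expand. rewrite ?(mink_sym e2 e1). vext; field; exact Hg.
Qed.

(** * Second fundamental form, Gauss map derivative, normal curvature *)

(* [sff N1 N2 N3] is the symmetric bilinear form with values [N1, N2, N3] on the basis
   pairs [(1,1), (1,2), (2,2)]; [II X s t] is [sff] of [(N11, N12, N22) X s t]. *)
Definition sff (N1 N2 N3 : V4) (a1 b1 a2 b2 : R) : V4 :=
  vadd (vadd (vscal (a1 * a2) N1) (vscal (a1 * b2 + b1 * a2) N2)) (vscal (b1 * b2) N3).

Definition mean_curv (e1 e2 N1 N2 N3 : V4) : V4 :=
  vscal (/ 2 * / gram e1 e2)
    (vadd (vadd (vscal (mink e2 e2) N1) (vscal (-2 * mink e1 e2) N2)) (vscal (mink e1 e1) N3)).

(* [dG(u)] up to the factor [/ sqrt (- gram)]: [II(u, e1) /\ e2 + e1 /\ II(u, e2)]. *)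
Definition dwedge (e1 e2 N1 N2 N3 : V4) (a b : R) : Biv :=
  badd (wedge (sff N1 N2 N3 a b 1 0) e2) (wedge e1 (sff N1 N2 N3 a b 0 1)).

(* [R^perp(e1, e2) v = II(e2, T1) - II(e1, T2)], where [Ti] is the tangent vector with
   [<Ti, ej> = - <v, II(ei, ej)>] (the tangential part of the derivatives of a normal field). *)
Definition ricci_op (e1 e2 N1 N2 N3 v : V4) : V4 :=
  vsub (sff N1 N2 N3 0 1 (dual_coef1 e1 e2 (- mink v N1) (- mink v N2))
                         (dual_coef2 e1 e2 (- mink v N1) (- mink v N2)))
       (sff N1 N2 N3 1 0 (dual_coef1 e1 e2 (- mink v N2) (- mink v N3))
                         (dual_coef2 e1 e2 (- mink v N2) (- mink v N3))).

Section Surface.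
Variable U : R -> R -> Prop.
Variable X : R -> R -> V4.
Hypothesis HU : open2 U.
Hypothesis HX : smoothV_on U X.
Hypothesis Htl : forall s t, U s t -> timelike_at X s t.

Local Notation e1 s t := (Xs X s t).
Local Notation e2 s t := (Xt X s t).

Lemma gdet_neq0 s t : U s t -> gdet X s t <> 0.
Proof. intros Hst. specialize (Htl s t Hst). unfold timelike_at in Htl. lra. Qed.

Lemma smoothV_on_Xs : smoothV_on U (Xs X).
Proof. exact (smoothV_on_pd1V U X HX). Qed.

Lemma smoothV_on_Xt : smoothV_on U (Xt X).
Proof. exact (smoothV_on_pd2V U X HX). Qed.

Lemma smooth_on_tan_coef V : smoothV_on U V ->
  smooth_on U (fun s t => tan_coef1 X s t (V s t)) /\ smooth_on U (fun s t => tan_coef2 X s t (V s t)).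
Proof.
  intros HV.
  assert (HXs := smoothV_on_Xs). assert (HXt := smoothV_on_Xt).
  assert (G11 : smooth_on U (g11 X)) by exact (smooth_on_mink U HU _ _ HXs HXs).
  assert (G12 : smooth_on U (g12 X)) by exact (smooth_on_mink U HU _ _ HXs HXt).
  assert (G22 : smooth_on U (g22 X)) by exact (smooth_on_mink U HU _ _ HXt HXt).
  assert (M1 := smooth_on_mink U HU _ _ HV HXs). assert (M2 := smooth_on_mink U HU _ _ HV HXt).
  assert (Hg : smooth_on U (gdet X))
    by exact (smooth_on_minus U HU _ _ (smooth_on_mult U HU _ _ G11 G22) (smooth_on_mult U HU _ _ G12 G12)).
  split; apply (smooth_on_div U HU); auto using gdet_neq0.
  - exact (smooth_on_minus U HU _ _ (smooth_on_mult U HU _ _ G22 M1) (smooth_on_mult U HU _ _ G12 M2)).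
  - exact (smooth_on_plus U HU _ _ (smooth_on_mult U HU _ _ (smooth_on_opp U HU _ G12) M1)
                                   (smooth_on_mult U HU _ _ G11 M2)).
Qed.

Lemma smoothV_on_norpart V : smoothV_on U V -> smoothV_on U (fun s t => norpart X s t (V s t)).
Proof.
  intros HV. destruct (smooth_on_tan_coef V HV) as [H1 H2].
  apply (smoothV_on_sub U HU); [exact HV|].
  apply (smoothV_on_add U HU); apply (smoothV_on_scal U HU); auto using smoothV_on_Xs, smoothV_on_Xt.
Qed.

Lemma pd1B_Gauss s t : U s t -> pd1B (Gauss X) s t =
  bscal (/ sqrt (- gdet X s t)) (badd (wedge (N11 X s t) (e2 s t)) (wedge (e1 s t) (N12 X s t))).
Proof.
  intros Hst. apply pd1B_unique.
  apply (is_deriveB_ext_loc (fun x => bscal (/ sqrt (- gram (e1 x t) (e2 x t))) (wedge (e1 x t) (e2 x t)))).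
  { destruct (open2_locally1 U HU s t Hst) as [d Hd]. exists d. intros y Hy.
    symmetry; apply Gauss_eq, Htl, Hd, Hy. }
  unfold N11, N12. rewrite <- (pd1V_pd2V U HU X s t HX Hst).
  apply (is_deriveB_unit_wedge (fun x => e1 x t) (fun x => e2 x t)); [| |exact (Htl s t Hst)];
    apply (smoothV_on_is_deriveV1 U);
    auto using smoothV_on_Xs, smoothV_on_Xt.
Qed.

Lemma pd2B_Gauss s t : U s t -> pd2B (Gauss X) s t =
  bscal (/ sqrt (- gdet X s t)) (badd (wedge (N12 X s t) (e2 s t)) (wedge (e1 s t) (N22 X s t))).
Proof.
  intros Hst. apply pd2B_unique.
  apply (is_deriveB_ext_loc (fun y => bscal (/ sqrt (- gram (e1 s y) (e2 s y))) (wedge (e1 s y) (e2 s y)))).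
  { destruct (open2_locally2 U HU s t Hst) as [d Hd]. exists d. intros y Hy.
    symmetry; apply Gauss_eq, Htl, Hd, Hy. }
  apply (is_deriveB_unit_wedge (fun y => e1 s y) (fun y => e2 s y)); [| |exact (Htl s t Hst)];
    apply (smoothV_on_is_deriveV2 U);
    auto using smoothV_on_Xs, smoothV_on_Xt.
Qed.

Lemma GstarH_dwedge s t a b : U s t ->
  let K := dwedge (e1 s t) (e2 s t) (N11 X s t) (N12 X s t) (N22 X s t) a b in
  GstarH X s t a b = (/ (- gdet X s t) * bivmet K K, / (- gdet X s t) * bivwedge K K).
Proof.
  intros Hst K. unfold GstarH, dGauss, Hform. rewrite pd1B_Gauss, pd2B_Gauss by exact Hst.
  assert (Hg : 0 <= - gdet X s t) by (specialize (Htl s t Hst); red in Htl; lra).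
  replace (/ - gdet X s t) with (/ sqrt (- gdet X s t) * / sqrt (- gdet X s t))
    by now rewrite <- Rinv_mult, sqrt_sqrt.
  unfold K, dwedge, sff, bivmet, bivwedge. f_equal; simpl; ring.
Qed.

Lemma GstarH_eq0_iff s t : U s t -> (forall a b, GstarH X s t a b = (0, 0)) <->
  (forall a b, let K := dwedge (e1 s t) (e2 s t) (N11 X s t) (N12 X s t) (N22 X s t) a b in
   bivmet K K = 0 /\ bivwedge K K = 0).
Proof.
  intros Hst.
  assert (Hp : / (- gdet X s t) <> 0) by (apply Rinv_neq_0_compat, Ropp_neq_0_compat, gdet_neq0, Hst).
  split; intros H a b; specialize (H a b); rewrite GstarH_dwedge in * by exact Hst.
  - injection H as E1 E2. rewrite <- (Rmult_0_r (/ - gdet X s t)) in E1, E2.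
    split; eapply Rmult_eq_reg_l; eassumption.
  - destruct H as [-> ->]. f_equal; ring.
Qed.

Lemma mink_pd1V_normal_field xi s t : normal_field X U xi -> U s t ->
  mink (pd1V xi s t) (e1 s t) = - mink (xi s t) (N11 X s t) /\
  mink (pd1V xi s t) (e2 s t) = - mink (xi s t) (N12 X s t).
Proof.
  intros [Hxi Hn] Hst. destruct (open2_locally1 U HU s t Hst) as [d Hd].
  unfold N11, N12. rewrite !norpart_nproj, !mink_nproj_normal by exact (Hn s t Hst).
  rewrite <- (pd1V_pd2V U HU X s t HX Hst).
  assert (Dxi := smoothV_on_is_deriveV1 U xi s t Hxi Hst).
  assert (D1 := smoothV_on_is_deriveV1 U _ s t smoothV_on_Xs Hst).
  assert (D2 := smoothV_on_is_deriveV1 U _ s t smoothV_on_Xt Hst).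
  split; [apply (mink_derive_locally_const _ _ s _ _ 0 Dxi D1) |
          apply (mink_derive_locally_const _ _ s _ _ 0 Dxi D2)];
    exists d; intros y Hy; destruct (Hn y t (Hd y Hy)); assumption.
Qed.

Lemma mink_pd2V_normal_field xi s t : normal_field X U xi -> U s t ->
  mink (pd2V xi s t) (e1 s t) = - mink (xi s t) (N12 X s t) /\
  mink (pd2V xi s t) (e2 s t) = - mink (xi s t) (N22 X s t).
Proof.
  intros [Hxi Hn] Hst. destruct (open2_locally2 U HU s t Hst) as [d Hd].
  unfold N12, N22. rewrite !norpart_nproj, !mink_nproj_normal by exact (Hn s t Hst).
  assert (Dxi := smoothV_on_is_deriveV2 U xi s t Hxi Hst).
  assert (D1 := smoothV_on_is_deriveV2 U _ s t smoothV_on_Xs Hst).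
  assert (D2 := smoothV_on_is_deriveV2 U _ s t smoothV_on_Xt Hst).
  split; [apply (mink_derive_locally_const _ _ t _ _ 0 Dxi D1) |
          apply (mink_derive_locally_const _ _ t _ _ 0 Dxi D2)];
    exists d; intros y Hy; destruct (Hn s y (Hd y Hy)); assumption.
Qed.

Lemma nproj_pd1V_nabla2 xi s t : normal_field X U xi -> U s t ->
  let c1 := tan_coef1 X s t (pd2V xi s t) in let c2 := tan_coef2 X s t (pd2V xi s t) in
  nproj (e1 s t) (e2 s t) (pd1V (nabla2 X xi) s t) =
  vsub (nproj (e1 s t) (e2 s t) (pd1V (pd2V xi) s t))
       (vadd (vscal c1 (N11 X s t)) (vscal c2 (N12 X s t))).
Proof.
  intros [Hxi _] Hst c1 c2. assert (Hxi2 := smoothV_on_pd2V U xi Hxi).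
  destruct (smooth_on_tan_coef _ Hxi2) as [H1 H2].
  unfold N11, N12. rewrite <- (pd1V_pd2V U HU X s t HX Hst).
  assert (D := is_deriveV_nproj (fun x => e1 x t) (fun x => e2 x t) (fun x => pd2V xi x t) s _ _ _ _ _
    (smoothV_on_is_deriveV1 U _ s t smoothV_on_Xs Hst) (smoothV_on_is_deriveV1 U _ s t smoothV_on_Xt Hst)
    (smoothV_on_is_deriveV1 U _ s t Hxi2 Hst)
    (smooth_on_is_derive1 U _ s t H1 Hst) (smooth_on_is_derive1 U _ s t H2 Hst)).
  rewrite (pd1V_unique _ _ _ _ D).
  now apply nproj_tangent_combination, gdet_neq0.
Qed.

Lemma nproj_pd2V_nabla1 xi s t : normal_field X U xi -> U s t ->
  let c1 := tan_coef1 X s t (pd1V xi s t) in let c2 := tan_coef2 X s t (pd1V xi s t) in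
  nproj (e1 s t) (e2 s t) (pd2V (nabla1 X xi) s t) =
  vsub (nproj (e1 s t) (e2 s t) (pd2V (pd1V xi) s t))
       (vadd (vscal c1 (N12 X s t)) (vscal c2 (N22 X s t))).
Proof.
  intros [Hxi _] Hst c1 c2. assert (Hxi1 := smoothV_on_pd1V U xi Hxi).
  destruct (smooth_on_tan_coef _ Hxi1) as [H1 H2].
  assert (D := is_deriveV_nproj (fun y => e1 s y) (fun y => e2 s y) (fun y => pd1V xi s y) t _ _ _ _ _
    (smoothV_on_is_deriveV2 U _ s t smoothV_on_Xs Hst) (smoothV_on_is_deriveV2 U _ s t smoothV_on_Xt Hst)
    (smoothV_on_is_deriveV2 U _ s t Hxi1 Hst)
    (smooth_on_is_derive2 U _ s t H1 Hst) (smooth_on_is_derive2 U _ s t H2 Hst)).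
  rewrite (pd2V_unique _ _ _ _ D).
  now apply nproj_tangent_combination, gdet_neq0.
Qed.

Lemma Rperp_ricci_op xi s t : normal_field X U xi -> U s t ->
  Rperp X xi s t = ricci_op (e1 s t) (e2 s t) (N11 X s t) (N12 X s t) (N22 X s t) (xi s t).
Proof.
  intros Hxi Hst. unfold Rperp, nabla1 at 1, nabla2 at 2. rewrite !norpart_nproj.
  rewrite nproj_pd1V_nabla2, nproj_pd2V_nabla1, (pd1V_pd2V U HU xi s t (proj1 Hxi) Hst) by assumption.
  destruct (mink_pd1V_normal_field xi s t Hxi Hst) as [W11 W12].
  destruct (mink_pd2V_normal_field xi s t Hxi Hst) as [W21 W22].
  unfold tan_coef1, tan_coef2. rewrite W11, W12, W21, W22.
  unfold ricci_op, sff, dual_coef1, dual_coef2, gram, gdet, g11, g12, g22. vext; ring.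
Qed.

End Surface.

(** * Algebra in a null frame *)

Lemma mink_orth_timelike (T v : V4) : mink T T < 0 -> mink v T = 0 ->
  0 <= mink v v /\ (mink v v = 0 -> v = vzero).
Proof.
  destruct T as [t1 t2 t3 t4], v as [v1 v2 v3 v4]. unfold mink; simpl. intros HT Hv.
  set (St := t2 * t2 + t3 * t3 + t4 * t4) in *. set (Sv := v2 * v2 + v3 * v3 + v4 * v4).
  assert (CS : (v2 * t2 + v3 * t3 + v4 * t4) ^ 2 <= Sv * St).
  { assert (E : Sv * St - (v2 * t2 + v3 * t3 + v4 * t4) ^ 2 =
                (v2 * t3 - v3 * t2) ^ 2 + (v2 * t4 - v4 * t2) ^ 2 + (v3 * t4 - v4 * t3) ^ 2)
      by (unfold Sv, St; ring).
    pose proof (pow2_ge_0 (v2 * t3 - v3 * t2)). pose proof (pow2_ge_0 (v2 * t4 - v4 * t2)).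
    pose proof (pow2_ge_0 (v3 * t4 - v4 * t3)). lra. }
  assert (E1 : v1 * t1 = v2 * t2 + v3 * t3 + v4 * t4) by lra.
  assert (Svp : 0 <= Sv) by (unfold Sv; nra).
  assert (Stp : 0 <= St) by (unfold St; nra).
  assert (Ht1 : St < t1 * t1) by (unfold St; lra).
  assert (K : v1 * v1 * (t1 * t1) <= Sv * (t1 * t1)).
  { rewrite <- E1 in CS. assert (Sv * St <= Sv * (t1 * t1)) by nra. nra. }
  assert (Hv1 : v1 * v1 <= Sv) by nra.
  split; [unfold Sv in Hv1; lra|].
  intros H0. assert (Hv1' : v1 * v1 = Sv) by (unfold Sv; lra).
  assert (v1 = 0).
  { rewrite <- E1, <- Hv1' in CS. assert (v1 * v1 * (t1 * t1 - St) <= 0) by nra.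
    assert (v1 * v1 <= 0) by nra. nra. }
  subst v1. unfold Sv in Hv1'.
  assert (v2 = 0) by nra. assert (v3 = 0) by nra. assert (v4 = 0) by nra. now subst.
Qed.

(* [det4 a b c d] is the determinant of the matrix with columns [a, b, c, d]. *)
Definition det4 (a b c d : V4) : R := bivwedge (wedge a b) (wedge c d).

Definition det3 (a11 a12 a13 a21 a22 a23 a31 a32 a33 : R) : R :=
  a11 * (a22 * a33 - a23 * a32) - a12 * (a21 * a33 - a23 * a31) + a13 * (a21 * a32 - a22 * a31).

(* The Gram determinant of [a, b, c, d] for the Minkowski product is [- det4 a b c d ^ 2]. *)
Lemma det4_sq_gram a b c d : - (det4 a b c d * det4 a b c d) =
    mink a a * det3 (mink b b) (mink b c) (mink b d) (mink c b) (mink c c) (mink c d)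
                    (mink d b) (mink d c) (mink d d)
  - mink a b * det3 (mink b a) (mink b c) (mink b d) (mink c a) (mink c c) (mink c d)
                    (mink d a) (mink d c) (mink d d)
  + mink a c * det3 (mink b a) (mink b b) (mink b d) (mink c a) (mink c b) (mink c d)
                    (mink d a) (mink d b) (mink d d)
  - mink a d * det3 (mink b a) (mink b b) (mink b c) (mink c a) (mink c b) (mink c c)
                    (mink d a) (mink d b) (mink d c).
Proof. destruct a, b, c, d. unfold det4, det3, mink, bivwedge, wedge; simpl. ring. Qed.

Lemma sff_split N1 N2 N3 a b c d :
  sff N1 N2 N3 a b c d = vadd (vscal c (sff N1 N2 N3 a b 1 0)) (vscal d (sff N1 N2 N3 a b 0 1)).
Proof. unfold sff. vext; ring. Qed.

Lemma bivmet_dwedge e1 e2 N1 N2 N3 a b :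
  let A := sff N1 N2 N3 a b 1 0 in let B := sff N1 N2 N3 a b 0 1 in
  bivmet (dwedge e1 e2 N1 N2 N3 a b) (dwedge e1 e2 N1 N2 N3 a b) =
  (mink A A * mink e2 e2 - mink A e2 * mink A e2) + 2 * (mink A e1 * mink e2 B - mink A B * mink e2 e1)
  + (mink e1 e1 * mink B B - mink e1 B * mink e1 B).
Proof.
  intros A B. unfold dwedge. fold A B.
  destruct A, B, e1, e2; unfold bivmet, mink, wedge, badd; simpl; ring.
Qed.

Lemma bivwedge_dwedge e1 e2 N1 N2 N3 a b :
  bivwedge (dwedge e1 e2 N1 N2 N3 a b) (dwedge e1 e2 N1 N2 N3 a b) =
  -2 * det4 e1 e2 (sff N1 N2 N3 a b 1 0) (sff N1 N2 N3 a b 0 1).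
Proof.
  unfold dwedge. destruct (sff N1 N2 N3 a b 1 0), (sff N1 N2 N3 a b 0 1), e1, e2.
  unfold det4, bivwedge, wedge, badd; simpl; ring.
Qed.

Lemma det4_lin_lin e1 e2 A B p1 p2 q1 q2 :
  det4 e1 e2 (vadd (vscal p1 A) (vscal p2 B)) (vadd (vscal q1 A) (vscal q2 B)) =
  (p1 * q2 - p2 * q1) * det4 e1 e2 A B.
Proof. destruct A, B, e1, e2. unfold det4, bivwedge, wedge, vadd, vscal; simpl; ring. Qed.

(* In a null frame [(l, n)] this is [<II(l,l), II(n,n)> - |II(l,n)|^2] written through
   the Codazzi-type differences [<II(e1, l), N(2,j)> - <II(e2, l), N(1,j)>]. *)
Lemma sff_gauss_null_frame N1 N2 N3 l1 l2 n1 n2 :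
  mink (sff N1 N2 N3 l1 l2 l1 l2) (sff N1 N2 N3 n1 n2 n1 n2)
  - mink (sff N1 N2 N3 l1 l2 n1 n2) (sff N1 N2 N3 l1 l2 n1 n2) =
  (l1 * n2 - l2 * n1) *
    (n1 * (mink (sff N1 N2 N3 1 0 l1 l2) N2 - mink (sff N1 N2 N3 0 1 l1 l2) N1) +
     n2 * (mink (sff N1 N2 N3 1 0 l1 l2) N3 - mink (sff N1 N2 N3 0 1 l1 l2) N2)).
Proof. destruct N1, N2, N3. unfold sff, mink, vadd, vscal; simpl. ring. Qed.

Lemma mink_sff_eq0 N1 N2 N3 l1 l2 n1 n2 v : l1 * n2 - l2 * n1 <> 0 ->
  mink v (sff N1 N2 N3 l1 l2 l1 l2) = 0 -> mink v (sff N1 N2 N3 l1 l2 n1 n2) = 0 ->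
  mink v (sff N1 N2 N3 n1 n2 n1 n2) = 0 ->
  mink v N1 = 0 /\ mink v N2 = 0 /\ mink v N3 = 0.
Proof.
  intros Hd Ha Hb Hc. set (d := l1 * n2 - l2 * n1) in *.
  set (A := sff N1 N2 N3 l1 l2 l1 l2) in *. set (B := sff N1 N2 N3 l1 l2 n1 n2) in *.
  set (C := sff N1 N2 N3 n1 n2 n1 n2) in *.
  assert (E1 : vscal (d * d) N1 =
                vadd (vadd (vscal (n2 * n2) A) (vscal (-2 * n2 * l2) B)) (vscal (l2 * l2) C))
    by (unfold d, A, B, C, sff; vext; ring).
  assert (E2 : vscal (d * d) N2 =
                vadd (vadd (vscal (- n1 * n2) A) (vscal (l1 * n2 + l2 * n1) B)) (vscal (- l1 * l2) C))
    by (unfold d, A, B, C, sff; vext; ring).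
  assert (E3 : vscal (d * d) N3 =
                vadd (vadd (vscal (n1 * n1) A) (vscal (-2 * n1 * l1) B)) (vscal (l1 * l1) C))
    by (unfold d, A, B, C, sff; vext; ring).
  apply (f_equal (mink v)) in E1, E2, E3. mink_expand_in E1. mink_expand_in E2. mink_expand_in E3.
  rewrite Ha, Hb, Hc in E1, E2, E3.
  assert (Hd2 : d * d <> 0) by now apply Rmult_integral_contrapositive.
  split; [|split]; apply (Rmult_eq_reg_l (d * d)); lra.
Qed.

Lemma exists_null_partner e1 e2 l1 l2 : gram e1 e2 < 0 ->
  mink (lin e1 e2 l1 l2) (lin e1 e2 l1 l2) = 0 -> lin e1 e2 l1 l2 <> vzero ->
  exists n1 n2, mink (lin e1 e2 n1 n2) (lin e1 e2 n1 n2) = 0 /\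
                mink (lin e1 e2 l1 l2) (lin e1 e2 n1 n2) = 1.
Proof.
  intros Hg Hl Hnz. setoid_rewrite mink_lin. rewrite mink_lin in Hl. unfold gram in Hg.
  set (g11 := mink e1 e1) in *. set (g12 := mink e1 e2) in *. set (g22 := mink e2 e2) in *.
  set (p := l1 * g11 + l2 * g12). set (q := l1 * g12 + l2 * g22).
  assert (Hpq : p * p + q * q <> 0).
  { intros H. assert (Hp : p = 0) by nra. assert (Hq : q = 0) by nra. apply Hnz.
    assert (E1 : l1 * (g11 * g22 - g12 * g12) = g22 * p - g12 * q) by (unfold p, q; ring).
    assert (E2 : l2 * (g11 * g22 - g12 * g12) = - g12 * p + g11 * q) by (unfold p, q; ring).
    rewrite Hp, Hq in E1, E2.
    assert (l1 = 0) by nra. assert (l2 = 0) by nra. subst. unfold lin. vext; ring. }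
  set (v1 := p / (p * p + q * q)). set (v2 := q / (p * p + q * q)).
  assert (Hv : l1 * v1 * g11 + (l1 * v2 + l2 * v1) * g12 + l2 * v2 * g22 = 1)
    by (unfold v1, v2, p, q in *; field; exact Hpq).
  set (k := (v1 * v1 * g11 + (v1 * v2 + v2 * v1) * g12 + v2 * v2 * g22) / 2).
  exists (v1 - k * l1), (v2 - k * l2). split.
  - transitivity (2 * k - 2 * k * (l1 * v1 * g11 + (l1 * v2 + l2 * v1) * g12 + l2 * v2 * g22)
                  + k * k * (l1 * l1 * g11 + (l1 * l2 + l2 * l1) * g12 + l2 * l2 * g22));
      [unfold k; field | rewrite Hv, Hl; ring].
  - transitivity ((l1 * v1 * g11 + (l1 * v2 + l2 * v1) * g12 + l2 * v2 * g22)
                  - k * (l1 * l1 * g11 + (l1 * l2 + l2 * l1) * g12 + l2 * l2 * g22));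
      [ring | rewrite Hv, Hl; ring].
Qed.

Section NullFrame.
Variables e1 e2 N1 N2 N3 : V4.
Hypothesis HN1 : is_normal e1 e2 N1.
Hypothesis HN2 : is_normal e1 e2 N2.
Hypothesis HN3 : is_normal e1 e2 N3.
Variables l1 l2 n1 n2 : R.
Hypothesis l_null : mink (lin e1 e2 l1 l2) (lin e1 e2 l1 l2) = 0.
Hypothesis n_null : mink (lin e1 e2 n1 n2) (lin e1 e2 n1 n2) = 0.
Hypothesis ln_one : mink (lin e1 e2 l1 l2) (lin e1 e2 n1 n2) = 1.

Local Notation II := (sff N1 N2 N3).
Local Notation K := (dwedge e1 e2 N1 N2 N3).
Local Notation d := (l1 * n2 - l2 * n1).

Lemma null_frame_metric :
  d * d * mink e1 e1 = -2 * l2 * n2 /\ d * d * mink e1 e2 = l1 * n2 + l2 * n1 /\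
  d * d * mink e2 e2 = -2 * l1 * n1 /\ d * d * gram e1 e2 = -1.
Proof.
  rewrite !mink_lin in *. unfold gram.
  set (q := fun a1 b1 a2 b2 =>
    a1 * a2 * mink e1 e1 + (a1 * b2 + b1 * a2) * mink e1 e2 + b1 * b2 * mink e2 e2).
  change (q l1 l2 l1 l2 = 0) in l_null. change (q n1 n2 n1 n2 = 0) in n_null.
  change (q l1 l2 n1 n2 = 1) in ln_one.
  split; [|split; [|split]].
  - transitivity (n2 * n2 * q l1 l2 l1 l2 - 2 * n2 * l2 * q l1 l2 n1 n2 + l2 * l2 * q n1 n2 n1 n2);
      [unfold q; ring | rewrite l_null, n_null, ln_one; ring].
  - transitivity (- n1 * n2 * q l1 l2 l1 l2 + (l1 * n2 + l2 * n1) * q l1 l2 n1 n2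
                  - l1 * l2 * q n1 n2 n1 n2);
      [unfold q; ring | rewrite l_null, n_null, ln_one; ring].
  - transitivity (n1 * n1 * q l1 l2 l1 l2 - 2 * n1 * l1 * q l1 l2 n1 n2 + l1 * l1 * q n1 n2 n1 n2);
      [unfold q; ring | rewrite l_null, n_null, ln_one; ring].
  - transitivity (q l1 l2 l1 l2 * q n1 n2 n1 n2 - q l1 l2 n1 n2 * q l1 l2 n1 n2);
      [unfold q; ring | rewrite l_null, n_null, ln_one; ring].
Qed.

Lemma null_frame_det_neq0 : d <> 0.
Proof. intros H. destruct null_frame_metric as [_ [_ [_ E]]]. rewrite H in E. lra. Qed.

Lemma is_normal_sff a1 b1 a2 b2 : is_normal e1 e2 (II a1 b1 a2 b2).
Proof.
  destruct HN1, HN2, HN3. unfold is_normal, sff. mink_expand.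
  split; repeat match goal with H : mink _ _ = 0 |- _ => rewrite H; clear H end; ring.
Qed.

Lemma normal_spacelike v : is_normal e1 e2 v -> 0 <= mink v v /\ (mink v v = 0 -> v = vzero).
Proof.
  intros [H1 H2]. apply (mink_orth_timelike (lin e1 e2 (l1 - n1) (l2 - n2))).
  - replace (mink (lin e1 e2 (l1 - n1) (l2 - n2)) (lin e1 e2 (l1 - n1) (l2 - n2))) with
      (mink (lin e1 e2 l1 l2) (lin e1 e2 l1 l2) - 2 * mink (lin e1 e2 l1 l2) (lin e1 e2 n1 n2)
       + mink (lin e1 e2 n1 n2) (lin e1 e2 n1 n2)) by (rewrite !mink_lin; ring).
    lra.
  - rewrite mink_lin_r, H1, H2. ring.
Qed.

Lemma normal_orth_det4_eq0 P Q : is_normal e1 e2 P -> is_normal e1 e2 Q -> mink P Q = 0 ->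
  det4 e1 e2 P Q = 0 -> P = vzero \/ Q = vzero.
Proof.
  intros [P1 P2] [Q1 Q2] HPQ Hd. assert (E := det4_sq_gram e1 e2 P Q). rewrite Hd in E.
  rewrite (mink_sym e1 P), (mink_sym e2 P), (mink_sym e1 Q), (mink_sym e2 Q), (mink_sym Q P),
    (mink_sym e2 e1), P1, P2, Q1, Q2, HPQ in E. unfold det3 in E.
  assert (E2 : gram e1 e2 * (mink P P * mink Q Q) = 0) by (unfold gram; lra).
  apply Rmult_integral in E2 as [E2|E2].
  - destruct null_frame_metric as [_ [_ [_ G]]]. rewrite E2 in G. lra.
  - apply Rmult_integral in E2 as [E2|E2]; [left | right]; apply normal_spacelike; now try split.
Qed.

Lemma mink_sff_null_frame a b :
  mink (II a b l1 l2) (II a b n1 n2) = - (d * d / 2) * bivmet (K a b) (K a b).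
Proof.
  rewrite (sff_split _ _ _ a b l1 l2), (sff_split _ _ _ a b n1 n2), bivmet_dwedge.
  destruct (is_normal_sff a b 1 0) as [A1 A2]. destruct (is_normal_sff a b 0 1) as [B1 B2].
  set (A := II a b 1 0) in *. set (B := II a b 0 1) in *.
  rewrite (mink_sym e2 B), (mink_sym e1 B), (mink_sym e2 e1), A1, A2, B1, B2. mink_expand.
  destruct null_frame_metric as [G11 [G12 [G22 _]]].
  replace (- (d * d / 2) * (mink A A * mink e2 e2 - 0 * 0 + 2 * (0 * 0 - mink A B * mink e1 e2)
            + (mink e1 e1 * mink B B - 0 * 0)))
    with (- (1 / 2) * ((d * d * mink e2 e2) * mink A A - 2 * (d * d * mink e1 e2) * mink A B
            + (d * d * mink e1 e1) * mink B B)) by field.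
  rewrite G11, G12, G22, (mink_sym B A). field.
Qed.

Lemma det4_sff_null_frame a b :
  d * bivwedge (K a b) (K a b) = -2 * det4 e1 e2 (II a b l1 l2) (II a b n1 n2).
Proof.
  rewrite (sff_split _ _ _ a b l1 l2), (sff_split _ _ _ a b n1 n2), bivwedge_dwedge, det4_lin_lin. ring.
Qed.

Lemma dwedge_isotropic a b : II a b n1 n2 = vzero ->
  bivmet (K a b) (K a b) = 0 /\ bivwedge (K a b) (K a b) = 0.
Proof.
  intros HQ. assert (Hd := null_frame_det_neq0).
  assert (Hm := mink_sff_null_frame a b). assert (Hw := det4_sff_null_frame a b).
  rewrite HQ, mink_0r in Hm. rewrite HQ in Hw.
  replace (det4 e1 e2 (II a b l1 l2) vzero) with 0 in Hw
    by (unfold det4; destruct e1, e2, (II a b l1 l2); unfold bivwedge, wedge; simpl; ring).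
  assert (Hdd : - (d * d / 2) <> 0) by (assert (0 < d * d) by nra; lra).
  split.
  - symmetry in Hm. apply Rmult_integral in Hm as [H|H]; [contradiction | exact H].
  - replace (-2 * 0) with 0 in Hw by ring. apply Rmult_integral in Hw as [H|H]; [contradiction | exact H].
Qed.

(* [G^*H] vanishes on [u] iff [II(u, l)] or [II(u, n)] vanishes; testing [u = l] and [u = l + n]
   then kills [II(l, n)] and [II(n, n)]. *)
Lemma dwedge_isotropic_iff : II l1 l2 l1 l2 <> vzero ->
  (forall a b, bivmet (K a b) (K a b) = 0 /\ bivwedge (K a b) (K a b) = 0) <->
  II l1 l2 n1 n2 = vzero /\ II n1 n2 n1 n2 = vzero.
Proof.
  intros Ha. assert (Hd := null_frame_det_neq0). split.
  - intros H.
    assert (Hor : forall a b, II a b l1 l2 = vzero \/ II a b n1 n2 = vzero).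
    { intros a b. destruct (H a b) as [Hm Hw]. apply normal_orth_det4_eq0; try apply is_normal_sff.
      - rewrite mink_sff_null_frame, Hm. ring.
      - assert (Hw' := det4_sff_null_frame a b). rewrite Hw in Hw'. lra. }
    assert (Hb : II l1 l2 n1 n2 = vzero) by (destruct (Hor l1 l2); tauto).
    split; [exact Hb|].
    assert (Eab : forall c1 c2, II (l1 + n1) (l2 + n2) c1 c2 = vadd (II l1 l2 c1 c2) (II n1 n2 c1 c2))
      by (intros; unfold sff; vext; ring).
    assert (Esym : II n1 n2 l1 l2 = II l1 l2 n1 n2) by (unfold sff; vext; ring).
    destruct (Hor (l1 + n1) (l2 + n2)) as [E|E]; rewrite Eab in E.
    + exfalso. apply Ha. rewrite <- E, Esym, Hb. vext; ring.
    + rewrite <- E, Hb. vext; ring.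
  - intros [Hb Hc] a b. apply dwedge_isotropic.
    apply (vscal_eq0 d); [exact Hd|].
    transitivity (vadd (vscal (a * n2 - b * n1) (II l1 l2 n1 n2))
                       (vscal (l1 * b - l2 * a) (II n1 n2 n1 n2)));
      [unfold sff; vext; ring | rewrite Hb, Hc; vext; ring].
Qed.

Lemma null_frame_metric_eq :
  mink e1 e1 = -2 * l2 * n2 / (d * d) /\ mink e1 e2 = (l1 * n2 + l2 * n1) / (d * d) /\
  mink e2 e2 = -2 * l1 * n1 / (d * d).
Proof.
  assert (Hd := null_frame_det_neq0). destruct null_frame_metric as [G11 [G12 [G22 _]]].
  split; [|split]; [rewrite <- G11 | rewrite <- G12 | rewrite <- G22]; field; exact Hd.
Qed.

Lemma mean_curv_null_frame : mean_curv e1 e2 N1 N2 N3 = II l1 l2 n1 n2.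
Proof.
  assert (Hd := null_frame_det_neq0). destruct null_frame_metric_eq as [E11 [E12 E22]].
  unfold mean_curv, gram, sff. rewrite E11, E12, E22.
  vext; field; split; auto; intros H; apply Hd; nra.
Qed.

Lemma ricci_op_null_frame v : vscal d (ricci_op e1 e2 N1 N2 N3 v) =
  vsub (vscal (mink v (II n1 n2 n1 n2)) (II l1 l2 l1 l2))
       (vscal (mink v (II l1 l2 l1 l2)) (II n1 n2 n1 n2)).
Proof.
  assert (Hd := null_frame_det_neq0). destruct null_frame_metric_eq as [E11 [E12 E22]].
  unfold ricci_op, dual_coef1, dual_coef2, gram, sff. mink_expand. rewrite E11, E12, E22.
  vext; field; split; auto; intros H; apply Hd; nra.
Qed.

End NullFrame.

(** * Surfaces with a canonical null direction *)

Section CanonicalNullDirection.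
Variable U : R -> R -> Prop.
Variable X : R -> R -> V4.
Variable Z : V4.
Hypothesis HU : open2 U.
Hypothesis HX : smoothV_on U X.
Hypothesis Htl : forall s t, U s t -> timelike_at X s t.
Hypothesis HZ : mink Z Z = 1.
Hypothesis Hnull : forall s t, U s t -> lightlike (tanpart X s t Z).
Hypothesis HII : forall s t, U s t ->
  II X s t (tan_coef1 X s t Z) (tan_coef2 X s t Z) (tan_coef1 X s t Z) (tan_coef2 X s t Z) <> vzero.

Local Notation e1 s t := (Xs X s t).
Local Notation e2 s t := (Xt X s t).
Local Notation l1 s t := (tan_coef1 X s t Z).
Local Notation l2 s t := (tan_coef2 X s t Z).
Local Notation sf s t := (sff (N11 X s t) (N12 X s t) (N22 X s t)).

Definition null_partner s t n1 n2 : Prop :=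
  mink (lin (e1 s t) (e2 s t) n1 n2) (lin (e1 s t) (e2 s t) n1 n2) = 0 /\
  mink (lin (e1 s t) (e2 s t) (l1 s t) (l2 s t)) (lin (e1 s t) (e2 s t) n1 n2) = 1.

Lemma is_normal_N s t : U s t -> is_normal (e1 s t) (e2 s t) (N11 X s t) /\
  is_normal (e1 s t) (e2 s t) (N12 X s t) /\ is_normal (e1 s t) (e2 s t) (N22 X s t).
Proof. intros Hst. split; [|split]; apply nproj_normal, (gdet_neq0 U X Htl), Hst. Qed.

Lemma tangent_null s t : U s t ->
  mink (lin (e1 s t) (e2 s t) (l1 s t) (l2 s t)) (lin (e1 s t) (e2 s t) (l1 s t) (l2 s t)) = 0.
Proof. intros Hst. apply (Hnull s t Hst). Qed.

Lemma exists_null_partner_at s t : U s t -> exists n1 n2, null_partner s t n1 n2.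
Proof.
  intros Hst. apply exists_null_partner; [apply Htl | apply tangent_null | apply Hnull]; exact Hst.
Qed.

Section AtPoint.
Variables s t n1 n2 : R.
Hypothesis Hst : U s t.
Hypothesis Hn : null_partner s t n1 n2.

Local Ltac null_frame_hyps :=
  destruct (is_normal_N s t Hst) as [HN1 [HN2 HN3]]; destruct Hn as [Hnn Hln];
  assert (Hll := tangent_null s t Hst).

Lemma null_partner_det : l1 s t * n2 - l2 s t * n1 <> 0.
Proof. null_frame_hyps. eapply null_frame_det_neq0; eassumption. Qed.

Lemma GstarH_eq0_iff_at : (forall a b, GstarH X s t a b = (0, 0)) <->
  sf s t (l1 s t) (l2 s t) n1 n2 = vzero /\ sf s t n1 n2 n1 n2 = vzero.
Proof.
  null_frame_hyps. rewrite (GstarH_eq0_iff U X HU HX Htl s t Hst).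
  apply dwedge_isotropic_iff; eauto.
Qed.

Lemma meancurv_at : meancurv X s t = sf s t (l1 s t) (l2 s t) n1 n2.
Proof. null_frame_hyps. eapply mean_curv_null_frame; eassumption. Qed.

Lemma ricci_op_at v :
  vscal (l1 s t * n2 - l2 s t * n1) (ricci_op (e1 s t) (e2 s t) (N11 X s t) (N12 X s t) (N22 X s t) v) =
  vsub (vscal (mink v (sf s t n1 n2 n1 n2)) (sf s t (l1 s t) (l2 s t) (l1 s t) (l2 s t)))
       (vscal (mink v (sf s t (l1 s t) (l2 s t) (l1 s t) (l2 s t))) (sf s t n1 n2 n1 n2)).
Proof. null_frame_hyps. eapply ricci_op_null_frame; eassumption. Qed.

Lemma sff_tangent_spacelike :
  0 < mink (sf s t (l1 s t) (l2 s t) (l1 s t) (l2 s t)) (sf s t (l1 s t) (l2 s t) (l1 s t) (l2 s t)).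
Proof.
  null_frame_hyps.
  destruct (normal_spacelike _ _ _ _ _ _ Hll Hnn Hln (sf s t (l1 s t) (l2 s t) (l1 s t) (l2 s t)))
    as [[H|H] H0]; [apply is_normal_sff; assumption | exact H |].
  exfalso. exact (HII s t Hst (H0 (eq_sym H))).
Qed.

End AtPoint.

Theorem minimal_flat_of_GstarH_eq0 : (forall s t, U s t -> forall a b, GstarH X s t a b = (0, 0)) ->
  minimal_on U X /\ flat_normal_on U X.
Proof.
  intros HG.
  assert (Hvan : forall s t n1 n2, U s t -> null_partner s t n1 n2 ->
            sf s t (l1 s t) (l2 s t) n1 n2 = vzero /\ sf s t n1 n2 n1 n2 = vzero)
    by (intros s t n1 n2 Hst Hn; apply (GstarH_eq0_iff_at s t n1 n2 Hst Hn), HG, Hst).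
  split.
  - intros s t Hst. destruct (exists_null_partner_at s t Hst) as [n1 [n2 Hn]].
    rewrite (meancurv_at s t n1 n2 Hst Hn). now apply Hvan.
  - intros xi Hxi s t Hst. destruct (exists_null_partner_at s t Hst) as [n1 [n2 Hn]].
    rewrite (Rperp_ricci_op U X HU HX Htl xi s t Hxi Hst).
    apply (vscal_eq0 _ _ (null_partner_det s t n1 n2 Hst Hn)).
    rewrite ricci_op_at by assumption. destruct (Hvan s t n1 n2 Hst Hn) as [_ ->].
    rewrite mink_0r. vext; ring.
Qed.

Local Notation nu s t := (norpart X s t Z).

Lemma nu_normal_field : normal_field X U (fun s t => nu s t).
Proof.
  split.
  - exact (smoothV_on_norpart U X HU HX Htl (fun _ _ => Z) (smoothV_on_const U HU Z)).
  - intros s t Hst. apply nproj_normal, (gdet_neq0 U X Htl), Hst.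
Qed.

Lemma mink_nu_nu s t : U s t -> mink (nu s t) (nu s t) = 1.
Proof.
  intros Hst. destruct (proj2 nu_normal_field s t Hst) as [H1 H2].
  assert (HT : mink (nu s t) (tanpart X s t Z) = 0)
    by (unfold tanpart, tvec; mink_expand; rewrite H1, H2; ring).
  assert (Ht := proj2 (Hnull s t Hst)).
  assert (EZ : vadd (tanpart X s t Z) (nu s t) = Z) by (unfold norpart; vext; ring).
  assert (E : mink (vadd (tanpart X s t Z) (nu s t)) (vadd (tanpart X s t Z) (nu s t)) = 1)
    by (rewrite EZ; exact HZ).
  rewrite mink_addl, !mink_addr, (mink_sym (tanpart X s t Z) (nu s t)), HT, Ht in E. lra.
Qed.

(* [nu = Z - Z^T], and the normal part of the derivative of [Z^T = l1 X_s + l2 X_t] is [II(., l)]. *)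
Lemma mink_pd1V_nu s t M : U s t -> is_normal (e1 s t) (e2 s t) M ->
  mink (pd1V (fun s t => nu s t) s t) M = - mink (sf s t 1 0 (l1 s t) (l2 s t)) M.
Proof.
  intros Hst HM. destruct (smooth_on_tan_coef U X HU HX Htl _ (smoothV_on_const U HU Z)) as [H1 H2].
  rewrite (pd1V_unique _ _ _ _ (is_deriveV_nproj (fun x => e1 x t) (fun x => e2 x t) (fun _ => Z) s
    _ _ _ _ _ (smoothV_on_is_deriveV1 U _ s t (smoothV_on_Xs U X HX) Hst)
    (smoothV_on_is_deriveV1 U _ s t (smoothV_on_Xt U X HX) Hst) (is_deriveV_const Z s)
    (smooth_on_is_derive1 U _ s t H1 Hst) (smooth_on_is_derive1 U _ s t H2 Hst))).
  destruct HM as [M1 M2].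
  rewrite !(mink_sym _ M). mink_expand. rewrite M1, M2.
  rewrite <- (mink_nproj_normal (e1 s t) (e2 s t) M (pd1V (Xs X) s t)),
          <- (mink_nproj_normal (e1 s t) (e2 s t) M (pd1V (Xt X) s t)) by now split.
  change (pd1V (Xt X) s t) with (pd1V (pd2V X) s t). rewrite (pd1V_pd2V U HU X s t HX Hst).
  change (nproj (e1 s t) (e2 s t) (pd1V (Xs X) s t)) with (N11 X s t).
  change (nproj (e1 s t) (e2 s t) (pd2V (pd1V X) s t)) with (N12 X s t).
  change (proj_coef1 (e1 s t) (e2 s t) Z) with (l1 s t).
  change (proj_coef2 (e1 s t) (e2 s t) Z) with (l2 s t).
  unfold sff. mink_expand. rewrite !(mink_sym M). ring.
Qed.

Lemma mink_pd2V_nu s t M : U s t -> is_normal (e1 s t) (e2 s t) M ->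
  mink (pd2V (fun s t => nu s t) s t) M = - mink (sf s t 0 1 (l1 s t) (l2 s t)) M.
Proof.
  intros Hst HM. destruct (smooth_on_tan_coef U X HU HX Htl _ (smoothV_on_const U HU Z)) as [H1 H2].
  rewrite (pd2V_unique _ _ _ _ (is_deriveV_nproj (fun y => e1 s y) (fun y => e2 s y) (fun _ => Z) t
    _ _ _ _ _ (smoothV_on_is_deriveV2 U _ s t (smoothV_on_Xs U X HX) Hst)
    (smoothV_on_is_deriveV2 U _ s t (smoothV_on_Xt U X HX) Hst) (is_deriveV_const Z t)
    (smooth_on_is_derive2 U _ s t H1 Hst) (smooth_on_is_derive2 U _ s t H2 Hst))).
  destruct HM as [M1 M2].
  rewrite !(mink_sym _ M). mink_expand. rewrite M1, M2.
  rewrite <- (mink_nproj_normal (e1 s t) (e2 s t) M (pd2V (Xs X) s t)),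
          <- (mink_nproj_normal (e1 s t) (e2 s t) M (pd2V (Xt X) s t)) by now split.
  change (nproj (e1 s t) (e2 s t) (pd2V (Xs X) s t)) with (N12 X s t).
  change (nproj (e1 s t) (e2 s t) (pd2V (Xt X) s t)) with (N22 X s t).
  change (proj_coef1 (e1 s t) (e2 s t) Z) with (l1 s t).
  change (proj_coef2 (e1 s t) (e2 s t) Z) with (l2 s t).
  unfold sff. mink_expand. rewrite !(mink_sym M). ring.
Qed.

(* Differentiate [<nu, nu> = 1]. *)
Lemma mink_nu_sff_tangent s t : U s t ->
  mink (nu s t) (sf s t 1 0 (l1 s t) (l2 s t)) = 0 /\ mink (nu s t) (sf s t 0 1 (l1 s t) (l2 s t)) = 0.
Proof.
  intros Hst. destruct nu_normal_field as [Hs Hn].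
  assert (Hc1 : locally s (fun x => mink (nu x t) (nu x t) = 1)).
  { destruct (open2_locally1 U HU s t Hst) as [d Hd]. exists d. intros y Hy. apply mink_nu_nu, Hd, Hy. }
  assert (Hc2 : locally t (fun y => mink (nu s y) (nu s y) = 1)).
  { destruct (open2_locally2 U HU s t Hst) as [d Hd]. exists d. intros y Hy. apply mink_nu_nu, Hd, Hy. }
  assert (D1 := smoothV_on_is_deriveV1 U _ s t Hs Hst).
  assert (D2 := smoothV_on_is_deriveV2 U _ s t Hs Hst).
  assert (E1 := mink_derive_locally_const _ _ _ _ _ _ D1 D1 Hc1).
  assert (E2 := mink_derive_locally_const _ _ _ _ _ _ D2 D2 Hc2).
  rewrite (mink_sym (nu s t)) in E1, E2.
  rewrite (mink_pd1V_nu s t) in E1 by (exact Hst || exact (Hn s t Hst)).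
  rewrite (mink_pd2V_nu s t) in E2 by (exact Hst || exact (Hn s t Hst)).
  rewrite !(mink_sym (nu s t)). split; lra.
Qed.

Section MinimalFlat.
Hypothesis Hmin : minimal_on U X.
Hypothesis Hflat : flat_normal_on U X.

Lemma sff_mixed_eq0 s t n1 n2 : U s t -> null_partner s t n1 n2 -> sf s t (l1 s t) (l2 s t) n1 n2 = vzero.
Proof. intros Hst Hn. rewrite <- (meancurv_at s t n1 n2 Hst Hn). now apply Hmin. Qed.

(* Flatness tested on the normal field extending [A := II(l, l)] at [(s, t)]. *)
Lemma flat_null_frame s t n1 n2 : U s t -> null_partner s t n1 n2 ->
  let A := sf s t (l1 s t) (l2 s t) (l1 s t) (l2 s t) in
  vscal (mink A (sf s t n1 n2 n1 n2)) A = vscal (mink A A) (sf s t n1 n2 n1 n2).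
Proof.
  intros Hst Hn A. destruct (is_normal_N s t Hst) as [HN1 [HN2 HN3]].
  assert (HA : is_normal (e1 s t) (e2 s t) A) by now apply is_normal_sff.
  set (xi := fun s' t' => norpart X s' t' A).
  assert (Hxi : normal_field X U xi).
  { split; [exact (smoothV_on_norpart U X HU HX Htl (fun _ _ => A) (smoothV_on_const U HU A))|].
    intros s' t' H'. apply nproj_normal, (gdet_neq0 U X Htl), H'. }
  assert (R0 := Hflat xi Hxi s t Hst).
  rewrite (Rperp_ricci_op U X HU HX Htl xi s t Hxi Hst) in R0.
  unfold xi in R0. rewrite norpart_nproj, nproj_id in R0 by (exact HA || apply (gdet_neq0 U X Htl), Hst).
  assert (E := ricci_op_at s t n1 n2 Hst Hn A). rewrite R0 in E.
  subst A. apply vsub_eq0. rewrite <- E. vext; ring.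
Qed.

Lemma mink_nu_N s t : U s t ->
  mink (nu s t) (N11 X s t) = 0 /\ mink (nu s t) (N12 X s t) = 0 /\ mink (nu s t) (N22 X s t) = 0.
Proof.
  intros Hst. destruct (exists_null_partner_at s t Hst) as [n1 [n2 Hn]].
  set (A := sf s t (l1 s t) (l2 s t) (l1 s t) (l2 s t)). set (C := sf s t n1 n2 n1 n2).
  assert (HnA : mink (nu s t) A = 0).
  { destruct (mink_nu_sff_tangent s t Hst) as [K1 K2].
    replace A with (vadd (vscal (l1 s t) (sf s t 1 0 (l1 s t) (l2 s t)))
                         (vscal (l2 s t) (sf s t 0 1 (l1 s t) (l2 s t)))) by (unfold A, sff; vext; ring).
    mink_expand. rewrite K1, K2. ring. }
  assert (HnC : mink (nu s t) C = 0).
  { assert (E := f_equal (mink (nu s t)) (flat_null_frame s t n1 n2 Hst Hn)). fold A C in E.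
    rewrite !mink_scalr, HnA in E.
    assert (HAA := sff_tangent_spacelike s t n1 n2 Hst Hn). fold A in HAA. nra. }
  apply (mink_sff_eq0 _ _ _ (l1 s t) (l2 s t) n1 n2);
    [exact (null_partner_det s t n1 n2 Hst Hn) | exact HnA | | exact HnC].
  rewrite (sff_mixed_eq0 s t n1 n2 Hst Hn). apply mink_0r.
Qed.

Lemma normal_field_pdV_nu :
  normal_field X U (pd1V (fun s t => nu s t)) /\ normal_field X U (pd2V (fun s t => nu s t)).
Proof.
  destruct nu_normal_field as [Hs Hn].
  split; (split; [now apply smoothV_on_pd1V || now apply smoothV_on_pd2V|]); intros s t Hst;
    destruct (mink_nu_N s t Hst) as [K1 [K2 K3]].
  - destruct (mink_pd1V_normal_field U X HU HX _ s t nu_normal_field Hst) as [W1 W2].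
    rewrite W1, W2, K1, K2. split; ring.
  - destruct (mink_pd2V_normal_field U X HU HX _ s t nu_normal_field Hst) as [W1 W2].
    rewrite W1, W2, K2, K3. split; ring.
Qed.

(* The symmetry of the second derivatives of [nu]. *)
Lemma codazzi_tangent s t : U s t ->
  mink (sf s t 0 1 (l1 s t) (l2 s t)) (N11 X s t) = mink (sf s t 1 0 (l1 s t) (l2 s t)) (N12 X s t) /\
  mink (sf s t 0 1 (l1 s t) (l2 s t)) (N12 X s t) = mink (sf s t 1 0 (l1 s t) (l2 s t)) (N22 X s t).
Proof.
  intros Hst. destruct normal_field_pdV_nu as [H1 H2]. destruct (is_normal_N s t Hst) as [HN1 [HN2 HN3]].
  destruct (mink_pd1V_normal_field U X HU HX _ s t H2 Hst) as [A1 A2].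
  destruct (mink_pd2V_normal_field U X HU HX _ s t H1 Hst) as [B1 B2].
  rewrite (pd1V_pd2V U HU _ s t (proj1 nu_normal_field) Hst) in A1, A2.
  rewrite A1 in B1. rewrite A2 in B2.
  rewrite !mink_pd1V_nu, !mink_pd2V_nu in B1, B2 by assumption.
  split; lra.
Qed.

Lemma sff_tangent_normal_orth s t n1 n2 : U s t -> null_partner s t n1 n2 ->
  mink (sf s t (l1 s t) (l2 s t) (l1 s t) (l2 s t)) (sf s t n1 n2 n1 n2) = 0.
Proof.
  intros Hst Hn.
  assert (E := sff_gauss_null_frame (N11 X s t) (N12 X s t) (N22 X s t) (l1 s t) (l2 s t) n1 n2).
  destruct (codazzi_tangent s t Hst) as [C1 C2].
  rewrite (sff_mixed_eq0 s t n1 n2 Hst Hn), mink_0r, C1, C2 in E. lra.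
Qed.

Theorem GstarH_eq0_of_minimal_flat s t : U s t -> forall a b, GstarH X s t a b = (0, 0).
Proof.
  intros Hst. destruct (exists_null_partner_at s t Hst) as [n1 [n2 Hn]].
  apply (GstarH_eq0_iff_at s t n1 n2 Hst Hn). split; [exact (sff_mixed_eq0 s t n1 n2 Hst Hn)|].
  assert (E := flat_null_frame s t n1 n2 Hst Hn). cbv zeta in E.
  rewrite (sff_tangent_normal_orth s t n1 n2 Hst Hn) in E.
  apply (vscal_eq0 _ _ (Rgt_not_eq _ _ (sff_tangent_spacelike s t n1 n2 Hst Hn))).
  rewrite <- E. vext; ring.
Qed.
End MinimalFlat.
End CanonicalNullDirection.

Theorem mainTheorem20 :
  forall (U : R -> R -> Prop) (X : R -> R -> V4) (Z : V4),
    open2 U ->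
    smoothV_on U X ->
    (forall s t, U s t -> timelike_at X s t) ->
    mink Z Z = 1 ->
    (forall s t, U s t -> lightlike (tanpart X s t Z)) ->
    (forall s t, U s t ->
       II X s t (tan_coef1 X s t Z) (tan_coef2 X s t Z)
                (tan_coef1 X s t Z) (tan_coef2 X s t Z) <> vzero) ->
    ((forall s t, U s t -> forall a b : R, GstarH X s t a b = (0, 0)) <->
     (minimal_on U X /\ flat_normal_on U X)).
Proof.
  intros U X Z HU HX Htl HZ Hnull HII. split.
  - exact (minimal_flat_of_GstarH_eq0 U X Z HU HX Htl Hnull HII).
  - intros [Hmin Hflat]. exact (GstarH_eq0_of_minimal_flat U X Z HU HX Htl HZ Hnull HII Hmin Hflat).
Qed.
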